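(* Let $k$ be odd. Then (i) $\lim_{N\to\infty}\mathbb{E}[\xi_{11}Z_{N,k}]=a_k\,\mathbb{E}[\xi_{11}^2]$, and (ii) $\lim_{N\to\infty}\mathbb{E}[(Z_{N,k}-a_k\xi_{11})^2]=0$.
   Context: $\{\xi_{ij}\}_{1\le i\le j}$ independent real random variables; $\{\xi_{ii}\}$ i.i.d. with mean zero, all moments finite; $\{\xi_{ij}\}_{i<j}$ i.i.d. with mean zero, $\mathbb{E}[\xi_{12}^2]=1$, all moments finite; $\xi_e=\xi_{\min(i,j),\max(i,j)}$ for $e=\{i,j\}$. A word is a finite sequence $w=(s_1,\dots,s_m)$ of positive integers; $\ell(w)=m$; $N$-word if letters lie in $\{1,\dots,N\}$; closed if $s_1=s_m$; $\mathrm{supp}(w)$ its letter set, $\mathrm{wt}(w)=\#\mathrm{supp}(w)$; $E_w=\{\{s_i,s_{i+1}\}:1\le i\le m-1\}$ (undirected; self edge $\{u,u\}$); $N_e^w=\#\{i\le m-1:\{s_i,s_{i+1}\}=e\}$; words are equivalent if a bijection of supports maps one to the other letter by letter. $\mathcal V_k^{(N)}$ = closed $N$-words of length $k+1$ with first letter $1$ having at least one self edge. $T_w=\prod_{e\in E_w}\xi_e^{N_e^w}$, $\bar T_w=T_w-\mathbb{E}T_w$, $Z_{N,k}=N^{-(k-1)/2}\sum_{w\in\mathcal V_k^{(N)}}\bar T_w$. $\check w$ is obtained from $w$ by deleting each letter equal to its predecessor. A Wigner word is a closed word $w$ with $N_e^w\ge2$ for all $e\in E_w$ and $\mathrm{wt}(w)=(\ell(w)+1)/2$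 (single-letter words are also Wigner words). For odd $k$, $a_k$ is the number of equivalence classes of closed words $w$ of length $k+1$ starting at $1$ with $N^w_{\{1,1\}}=1$ and $\check w$ a Wigner word of length $k$. *)

From Stdlib Require Import Reals List Arith Bool.
Import ListNotations.
Open Scope R_scope.
Open Scope bool_scope.

Fixpoint words (N m : nat) : list (list nat) :=
  match m with
  | O => [[]]
  | S m' => flat_map (fun w => map (fun a => a :: w) (seq 1 N)) (words N m')
  end.

(* undirected edge {a,b}, represented as (min, max) *)
Definition edge (a b : nat) : nat * nat := (Nat.min a b, Nat.max a b).

Fixpoint edge_list (w : list nat) : list (nat * nat) :=
  match w with
  | a :: ((b :: _) as t) => edge a b :: edge_list t
  | _ => []
  end.

Definition pair_eq_dec : forall p q : nat * nat, {p = q} + {p <> q}.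
Proof. decide equality; apply Nat.eq_dec. Defined.

Definition edge_eqb (p q : nat * nat) : bool :=
  Nat.eqb (fst p) (fst q) && Nat.eqb (snd p) (snd q).

Definition Eset (w : list nat) : list (nat * nat) := nodup pair_eq_dec (edge_list w).

Definition Nmult (w : list nat) (e : nat * nat) : nat :=
  length (filter (edge_eqb e) (edge_list w)).

Definition closedb (w : list nat) : bool :=
  match w with
  | [] => false
  | a :: _ => Nat.eqb a (last w a)
  end.

Definition has_self_edge (w : list nat) : bool :=
  existsb (fun e => Nat.eqb (fst e) (snd e)) (edge_list w).

Definition wt (w : list nat) : nat := length (nodup Nat.eq_dec w).

Definition Vset (N k : nat) : list (list nat) :=
  filter (fun w => Nat.eqb (hd 0%nat w) 1 && closedb w && has_self_edge w)
         (words N (k + 1)).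

Fixpoint check (w : list nat) : list nat :=
  match w with
  | a :: ((b :: _) as t) => if Nat.eqb a b then check t else a :: check t
  | _ => w
  end.

Definition Wigner (w : list nat) : Prop :=
  closedb w = true /\
  (forall e, In e (Eset w) -> (2 <= Nmult w e)%nat) /\
  (2 * wt w = length w + 1)%nat.

Definition equiv_words (w w' : list nat) : Prop :=
  exists f : nat -> nat,
    (forall x y, In x w -> In y w -> f x = f y -> x = y) /\ map f w = w'.

Definition ak_word (k : nat) (w : list nat) : Prop :=
  length w = (k + 1)%nat /\ hd 0%nat w = 1%nat /\ closedb w = true /\
  (forall x, In x w -> (1 <= x)%nat) /\
  Nmult w (1%nat, 1%nat) = 1%nat /\
  Wigner (check w) /\ length (check w) = k.

(* [num_classes P n]: the set of words satisfying P has exactly n equivalence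
   classes (a list of n pairwise inequivalent representatives exhausting P) *)
Definition num_classes (P : list nat -> Prop) (n : nat) : Prop :=
  exists l : list (list nat),
    length l = n /\
    (forall w, In w l -> P w) /\
    (forall w, P w -> exists w', In w' l /\ equiv_words w w') /\
    (forall i j, (i < j < n)%nat -> ~ equiv_words (nth i l []) (nth j l [])).

Definition xi_e {Omega : Type} (xi : nat -> nat -> Omega -> R) (e : nat * nat)
  : Omega -> R := xi (fst e) (snd e).

Definition Rsum {A : Type} (f : A -> R) (l : list A) : R :=
  fold_right Rplus 0 (map f l).
Definition Rprod {A : Type} (f : A -> R) (l : list A) : R :=
  fold_right Rmult 1 (map f l).

Definition Tw {Omega : Type} (xi : nat -> nat -> Omega -> R) (w : list nat)
  : Omega -> R :=
  fun om => Rprod (fun e => xi_e xi e om ^ Nmult w e) (Eset w).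

Definition ZNk {Omega : Type} (E : (Omega -> R) -> R)
  (xi : nat -> nat -> Omega -> R) (N k : nat) : Omega -> R :=
  fun om => (/ sqrt (INR N)) ^ (k - 1) *
            Rsum (fun w => Tw xi w om - E (Tw xi w)) (Vset N k).

Definition valid_index (p : nat * nat) : Prop := (1 <= fst p <= snd p)%nat.

Definition model_hyps {Omega : Type} (E : (Omega -> R) -> R)
  (xi : nat -> nat -> Omega -> R) : Prop :=
  (forall f g, E (fun om => f om + g om) = E f + E g) /\
  (forall c f, E (fun om => c * f om) = c * E f) /\
  E (fun _ => 1) = 1 /\
  (* independence of {xi_ij}_{i<=j} (at the level of mixed moments) *)
  (forall l : list ((nat * nat) * nat),
      NoDup (map fst l) -> (forall q, In q l -> valid_index (fst q)) ->
      E (fun om => Rprod (fun q => xi_e xi (fst q) om ^ snd q) l)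
      = Rprod (fun q => E (fun om => xi_e xi (fst q) om ^ snd q)) l) /\
  (* identical distribution (equality of all moments) *)
  (forall i n, (1 <= i)%nat -> E (fun om => xi i i om ^ n) = E (fun om => xi 1%nat 1%nat om ^ n)) /\
  (forall i j n, (1 <= i < j)%nat ->
      E (fun om => xi i j om ^ n) = E (fun om => xi 1%nat 2%nat om ^ n)) /\
  E (xi 1%nat 1%nat) = 0 /\
  E (xi 1%nat 2%nat) = 0 /\
  E (fun om => xi 1%nat 2%nat om ^ 2) = 1.

From Stdlib Require Import Reals List Arith Lia Lra Bool FunctionalExtensionality.
Import ListNotations.
Open Scope R_scope.

(* Expanding, E[xi_11 Z] and E[(Z - a xi_11)^2] become sums over words w of V_k^(N) (and pairs
   of such words) of products of moments of the xi_e, and a term vanishes as soon as some edge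
   is traversed exactly once, the factor xi_11 counting as one traversal of {1,1}.  In a
   surviving term of the first sum every non-loop edge of w is traversed at least twice and w
   takes at least one loop step; since the skeleton of w is connected it has at least wt w - 1
   edges, hence wt w <= (k+1)/2.  Equality forces a tree each of whose edges is traversed exactly
   twice, plus a single loop step along {1,1}: these are exactly the words whose classes are
   counted by a_k.  Each class has N^((k-1)/2) (1 + o(1)) elements, each contributing E[xi_11^2],
   while lower-weight words are O(N^((k-3)/2)) in number.  For the second moment the same count,
   applied to w ++ w' and combined with the parity of closed walks on a tree, leaves only pairs
   of such words meeting in the letter 1 alone, which contribute a_k^2 E[xi_11^2] N^(k-1);
   expanding the square then gives the limit 0. *)

Lemma edge_eqb_spec p q : edge_eqb p q = true <-> p = q.
Proof. destruct p as [a b], q as [c d]; unfold edge_eqb; simpl.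
rewrite andb_true_iff, !Nat.eqb_eq. split; [intros [-> ->]; auto | intros H; inversion H; auto]. Qed.

Lemma edge_eqb_refl p : edge_eqb p p = true.
Proof. apply edge_eqb_spec; auto. Qed.

Lemma edge_eqb_false p q : p <> q -> edge_eqb p q = false.
Proof. intros H. destruct (edge_eqb p q) eqn:E; auto. apply edge_eqb_spec in E; congruence. Qed.

Definition ecount (e : nat*nat) (L : list (nat*nat)) : nat := length (filter (edge_eqb e) L).

Lemma ecount_cons e a L : ecount e (a :: L) = ((if edge_eqb e a then 1 else 0) + ecount e L)%nat.
Proof. unfold ecount; simpl. destruct (edge_eqb e a); simpl; auto. Qed.

Lemma ecount_app e L1 L2 : ecount e (L1 ++ L2) = (ecount e L1 + ecount e L2)%nat.
Proof. unfold ecount. rewrite filter_app, length_app. auto. Qed.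

Lemma ecount_notin e L : ~ In e L -> ecount e L = 0%nat.
Proof. induction L; simpl; intros H; auto. rewrite ecount_cons, edge_eqb_false, IHL; auto. Qed.

Lemma ecount_pos e L : In e L -> (1 <= ecount e L)%nat.
Proof. induction L; simpl; intros H; [contradiction|]. rewrite ecount_cons.
destruct H as [->|H]; [rewrite edge_eqb_refl; lia | specialize (IHL H); lia]. Qed.

Lemma ecount_le_length e L : (ecount e L <= length L)%nat.
Proof. unfold ecount. apply filter_length_le. Qed.

Lemma Rsum_nil {A} (f : A -> R) : Rsum f [] = 0. Proof. reflexivity. Qed.

Lemma Rsum_cons {A} (f : A -> R) a l : Rsum f (a :: l) = f a + Rsum f l. Proof. reflexivity. Qed.

Lemma Rsum_app {A} (f : A -> R) l1 l2 : Rsum f (l1 ++ l2) = Rsum f l1 + Rsum f l2.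
Proof. induction l1; simpl; [unfold Rsum; simpl; ring|]. rewrite !Rsum_cons, IHl1. ring. Qed.

Lemma Rsum_ext {A} (f g : A -> R) l : (forall x, In x l -> f x = g x) -> Rsum f l = Rsum g l.
Proof. induction l; intros H; auto. rewrite !Rsum_cons. f_equal; [apply H; simpl; auto | apply IHl; intros; apply H; simpl; auto]. Qed.

Lemma Rsum_plus {A} (f g : A -> R) l : Rsum (fun x => f x + g x) l = Rsum f l + Rsum g l.
Proof. induction l; [unfold Rsum; simpl; ring|]. rewrite !Rsum_cons, IHl; ring. Qed.

Lemma Rsum_scal {A} (f : A -> R) c l : Rsum (fun x => c * f x) l = c * Rsum f l.
Proof. induction l; [unfold Rsum; simpl; ring|]. rewrite !Rsum_cons, IHl; ring. Qed.

Lemma Rsum_zero {A} (l : list A) : Rsum (fun _ => 0) l = 0.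
Proof. induction l; auto. rewrite Rsum_cons, IHl; ring. Qed.

Lemma Rsum_map {A B} (f : B -> R) (g : A -> B) l : Rsum f (map g l) = Rsum (fun x => f (g x)) l.
Proof. unfold Rsum. rewrite map_map. auto. Qed.

Lemma Rsum_flat_map {A B} (f : B -> R) (g : A -> list B) l :
  Rsum f (flat_map g l) = Rsum (fun x => Rsum f (g x)) l.
Proof. induction l; auto. simpl. rewrite Rsum_app, IHl, Rsum_cons. auto. Qed.

Lemma Rsum_filter {A} (f : A -> R) (P : A -> bool) l :
  Rsum f (filter P l) = Rsum (fun x => if P x then f x else 0) l.
Proof. induction l; auto. simpl. rewrite (Rsum_cons _ a l). destruct (P a); [rewrite Rsum_cons|]; rewrite IHl; ring. Qed.

Lemma Rsum_swap {A B} (f : A -> B -> R) l1 l2 :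
  Rsum (fun x => Rsum (fun y => f x y) l2) l1 = Rsum (fun y => Rsum (fun x => f x y) l1) l2.
Proof. induction l1; simpl.
- rewrite Rsum_nil. symmetry. apply (Rsum_zero l2).
- rewrite Rsum_cons, IHl1, <- Rsum_plus. apply Rsum_ext. intros; rewrite Rsum_cons; auto. Qed.

Lemma Rsum_mult {A B} (f : A -> R) (g : B -> R) l1 l2 :
  Rsum f l1 * Rsum g l2 = Rsum (fun x => Rsum (fun y => f x * g y) l2) l1.
Proof. induction l1; simpl; [unfold Rsum; simpl; ring|].
rewrite !Rsum_cons, <- IHl1, Rsum_scal. ring. Qed.

Lemma Rsum_le {A} (f g : A -> R) l : (forall x, In x l -> f x <= g x) -> Rsum f l <= Rsum g l.
Proof. induction l; intros H; [unfold Rsum; simpl; lra|]. rewrite !Rsum_cons.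
assert (f a <= g a) by (apply H; simpl; auto). assert (Rsum f l <= Rsum g l) by (apply IHl; intros; apply H; simpl; auto). lra. Qed.

Lemma Rsum_abs {A} (f : A -> R) l : Rabs (Rsum f l) <= Rsum (fun x => Rabs (f x)) l.
Proof. induction l; [unfold Rsum; simpl; rewrite Rabs_R0; lra|]. rewrite !Rsum_cons.
eapply Rle_trans; [apply Rabs_triang|]. lra. Qed.

Lemma Rsum_const_count {A} (P : A -> bool) l c :
  Rsum (fun x => if P x then c else 0) l = c * INR (length (filter P l)).
Proof. induction l; [unfold Rsum; simpl; ring|]. rewrite Rsum_cons, IHl. simpl.
destruct (P a); simpl length; [rewrite S_INR|]; ring. Qed.

Lemma Rprod_cons {A} (f : A -> R) a l : Rprod f (a :: l) = f a * Rprod f l. Proof. reflexivity. Qed.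

Lemma Rprod_ext {A} (f g : A -> R) l : (forall x, In x l -> f x = g x) -> Rprod f l = Rprod g l.
Proof. induction l; intros H; auto. rewrite !Rprod_cons. f_equal; [apply H; simpl; auto | apply IHl; intros; apply H; simpl; auto]. Qed.

Lemma Rprod_map {A B} (f : B -> R) (g : A -> B) l : Rprod f (map g l) = Rprod (fun x => f (g x)) l.
Proof. unfold Rprod. rewrite map_map. auto. Qed.

Lemma Rprod_app {A} (f : A -> R) l1 l2 : Rprod f (l1 ++ l2) = Rprod f l1 * Rprod f l2.
Proof. induction l1; simpl; [unfold Rprod; simpl; ring|]. rewrite !Rprod_cons, IHl1. ring. Qed.

Lemma Rprod_one {A} (f : A -> R) l : (forall x, In x l -> f x = 1) -> Rprod f l = 1.
Proof. induction l; intros H; auto. rewrite Rprod_cons, IHl, H; [ring|simpl;auto|intros; apply H; simpl; auto]. Qed.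

Lemma Rprod_single (f : nat*nat -> R) l a :
  NoDup l -> In a l -> (forall x, In x l -> x <> a -> f x = 1) -> Rprod f l = f a.
Proof. induction l; intros Hn Ha H; [contradiction|]. inversion Hn; subst. rewrite Rprod_cons.
destruct Ha as [->|Ha].
- rewrite Rprod_one; [ring|]. intros x Hx. apply H; simpl; auto. intros ->; contradiction.
- rewrite H, IHl; simpl; auto; [ring| |]. intros; apply H; simpl; auto. intros ->; contradiction. Qed.

Lemma Rprod_zero (f : nat*nat -> R) l a : In a l -> f a = 0 -> Rprod f l = 0.
Proof. induction l; intros Ha H; [contradiction|]. rewrite Rprod_cons. destruct Ha as [->|Ha].
rewrite H; ring. rewrite IHl; auto; ring. Qed.

Lemma Rprod_bound {A} (f : A -> R) l K : 1 <= K -> (forall x, In x l -> Rabs (f x) <= K) ->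
  Rabs (Rprod f l) <= K ^ length l.
Proof. intros HK. induction l; intros H; simpl; [unfold Rprod; simpl; rewrite Rabs_R1; lra|].
rewrite Rprod_cons, Rabs_mult. apply Rmult_le_compat; try apply Rabs_pos. apply H; simpl; auto.
apply IHl; intros; apply H; simpl; auto. Qed.

Lemma Rprod_nodup_pow (g : nat*nat -> R) L :
  Rprod (fun e => g e ^ ecount e L) (nodup pair_eq_dec L) = Rprod g L.
Proof.
  induction L as [|a L IH]; simpl; auto.
  assert (Hgen : forall l, (forall x, In x l -> x <> a) ->
     Rprod (fun e => g e ^ ecount e (a :: L)) l = Rprod (fun e => g e ^ ecount e L) l).
  { intros l Hl. apply Rprod_ext. intros x Hx. rewrite ecount_cons, edge_eqb_false; auto. }
  destruct (in_dec pair_eq_dec a L) as [Hin|Hnin].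
  - rewrite Rprod_cons, <- IH.
    assert (Hin' : In a (nodup pair_eq_dec L)) by (apply nodup_In; auto).
    assert (Hnd := NoDup_nodup pair_eq_dec L).
    revert Hin' Hnd. generalize (nodup pair_eq_dec L). intros l Hin' Hnd.
    induction l as [|b l IHl]; [contradiction|]. inversion Hnd; subst.
    rewrite !Rprod_cons, ecount_cons. destruct Hin' as [->|Hin'].
    + rewrite edge_eqb_refl. rewrite (Hgen l). simpl; ring. intros x Hx ->; contradiction.
    + assert (b <> a) by (intros ->; contradiction). rewrite edge_eqb_false by auto.
      rewrite IHl; auto. simpl. ring.
  - rewrite !Rprod_cons, ecount_cons, edge_eqb_refl, ecount_notin by auto.
    rewrite Hgen. rewrite IH. simpl; ring.
    intros x Hx ->. apply nodup_In in Hx. contradiction.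
Qed.

Lemma E_ext {Omega} (E : (Omega -> R) -> R) f g : (forall om, f om = g om) -> E f = E g.
Proof. intros H. f_equal. apply functional_extensionality; auto. Qed.

Definition linear_E {Omega} (E : (Omega -> R) -> R) : Prop :=
  (forall f g, E (fun om => f om + g om) = E f + E g) /\
  (forall c f, E (fun om => c * f om) = c * E f) /\
  E (fun _ => 1) = 1.

Lemma E_const {Omega} (E : (Omega -> R) -> R) c : linear_E E -> E (fun _ => c) = c.
Proof. intros [H1 [H2 H3]]. rewrite (E_ext E (fun _ => c) (fun _ => c * 1)) by (intros; ring).
rewrite H2, H3; ring. Qed.

Lemma E_add {Omega} (E : (Omega -> R) -> R) f g : linear_E E -> E (fun om => f om + g om) = E f + E g.
Proof. intros [H1 _]. apply H1. Qed.

Lemma E_scal {Omega} (E : (Omega -> R) -> R) c f : linear_E E -> E (fun om => c * f om) = c * E f.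
Proof. intros [_ [H2 _]]. apply H2. Qed.

Lemma E_sum {Omega A} (E : (Omega -> R) -> R) (F : A -> Omega -> R) l : linear_E E ->
  E (fun om => Rsum (fun x => F x om) l) = Rsum (fun x => E (F x)) l.
Proof. intros HE. induction l.
- unfold Rsum; simpl. apply E_const; auto.
- rewrite Rsum_cons, <- IHl. rewrite <- E_add by auto. apply E_ext. intros; rewrite Rsum_cons; auto. Qed.

Definition monomial {Omega} (xi : nat -> nat -> Omega -> R) (L : list (nat*nat)) (om : Omega) : R :=
  Rprod (fun e => xi_e xi e om) L.

Lemma Tw_monomial {Omega} (xi : nat -> nat -> Omega -> R) w om : Tw xi w om = monomial xi (edge_list w) om.
Proof. unfold Tw, monomial, Eset, Nmult. apply (Rprod_nodup_pow (fun e => xi_e xi e om)). Qed.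

Lemma monomial_app {Omega} (xi : nat -> nat -> Omega -> R) L1 L2 om :
  monomial xi (L1 ++ L2) om = monomial xi L1 om * monomial xi L2 om.
Proof. unfold monomial. apply Rprod_app. Qed.

Definition edge_moment {Omega} (E : (Omega -> R) -> R) (xi : nat -> nat -> Omega -> R) (e : nat*nat) (n : nat) : R :=
  if Nat.eqb (fst e) (snd e) then E (fun om => xi 1%nat 1%nat om ^ n) else E (fun om => xi 1%nat 2%nat om ^ n).

Definition moment {Omega} (E : (Omega -> R) -> R) (xi : nat -> nat -> Omega -> R) (L : list (nat*nat)) : R :=
  Rprod (fun e => edge_moment E xi e (ecount e L)) (nodup pair_eq_dec L).

Definition valid_edges (L : list (nat*nat)) : Prop := forall e, In e L -> valid_index e.

Lemma model_linear_E {Omega} (E : (Omega -> R) -> R) xi : model_hyps E xi -> linear_E E.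
Proof. intros [H1 [H2 [H3 _]]]. split; auto. Qed.

Lemma E_pow_edge {Omega} (E : (Omega -> R) -> R) xi e n : model_hyps E xi -> valid_index e ->
  E (fun om => xi_e xi e om ^ n) = edge_moment E xi e n.
Proof. intros (_&_&_&_&Hd&Ho&_) [H1 H2]. unfold edge_moment, xi_e. destruct e as [i j]; simpl in *.
destruct (Nat.eqb_spec i j).
- subst. apply Hd; auto.
- apply Ho; lia. Qed.

Lemma E_monomial {Omega} (E : (Omega -> R) -> R) xi L : model_hyps E xi -> valid_edges L ->
  E (monomial xi L) = moment E xi L.
Proof.
  intros HM HV. assert (HM' := HM). destruct HM' as (H1&H2&H3&Hind&Hrest).
  pose (l := map (fun e => (e, ecount e L)) (nodup pair_eq_dec L)).
  assert (Heq : forall om, monomial xi L om = Rprod (fun q => xi_e xi (fst q) om ^ snd q) l).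
  { intros om. unfold l. rewrite Rprod_map. simpl. unfold monomial.
    symmetry. apply (Rprod_nodup_pow (fun e => xi_e xi e om)). }
  rewrite (E_ext E _ _ Heq). rewrite Hind.
  - unfold l, moment. rewrite Rprod_map. apply Rprod_ext. intros x Hx. simpl.
    apply E_pow_edge; auto. apply HV. apply nodup_In in Hx. auto.
  - unfold l. rewrite map_map. simpl. rewrite map_id. apply NoDup_nodup.
  - unfold l. intros q Hq. apply in_map_iff in Hq. destruct Hq as [x [<- Hx]]. simpl.
    apply HV. apply nodup_In in Hx. auto.
Qed.

Lemma edge_moment_one {Omega} (E : (Omega -> R) -> R) xi e : model_hyps E xi -> edge_moment E xi e 1 = 0.
Proof. intros HM. assert (HL := model_linear_E E xi HM). destruct HM as (_&_&_&_&_&_&H0&H0'&_).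
unfold edge_moment. destruct (_ =? _).
- rewrite (E_ext E _ (xi 1%nat 1%nat)) by (intros; ring). auto.
- rewrite (E_ext E _ (xi 1%nat 2%nat)) by (intros; ring). auto. Qed.

Lemma moment_single_edge {Omega} (E : (Omega -> R) -> R) xi L e : model_hyps E xi -> In e L -> ecount e L = 1%nat ->
  moment E xi L = 0.
Proof. intros HM He Hc. unfold moment. apply (Rprod_zero _ _ e). apply nodup_In; auto.
rewrite Hc. apply edge_moment_one; auto. Qed.

Lemma moment_neq0_paired {Omega} (E : (Omega -> R) -> R) xi L : model_hyps E xi -> moment E xi L <> 0 ->
  forall e, In e L -> (2 <= ecount e L)%nat.
Proof. intros HM H e He. assert (H1 := ecount_pos e L He).
destruct (Nat.eq_dec (ecount e L) 1). exfalso; apply H; eapply moment_single_edge; eauto. lia. Qed.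

Definition diag_moment {Omega} (E : (Omega -> R) -> R) (xi : nat -> nat -> Omega -> R) n :=
  E (fun om => xi 1%nat 1%nat om ^ n).
Definition offdiag_moment {Omega} (E : (Omega -> R) -> R) (xi : nat -> nat -> Omega -> R) n :=
  E (fun om => xi 1%nat 2%nat om ^ n).

Lemma moment_bound {Omega} (E : (Omega -> R) -> R) xi L K : 1 <= K ->
  (forall n, (n <= length L)%nat -> Rabs (diag_moment E xi n) <= K /\ Rabs (offdiag_moment E xi n) <= K) ->
  Rabs (moment E xi L) <= K ^ length L.
Proof. intros HK HB. unfold moment. eapply Rle_trans. apply Rprod_bound; eauto.
- intros x Hx. unfold edge_moment. destruct (_ =? _); apply HB; apply ecount_le_length.
- apply Rle_pow; auto. apply NoDup_incl_length. apply NoDup_nodup. intros x; apply nodup_In. Qed.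

Lemma moment_pairing {Omega} (E : (Omega -> R) -> R) xi L : model_hyps E xi ->
  In (1%nat,1%nat) L -> (forall e, In e L -> ecount e L = 2%nat) ->
  (forall e, In e L -> e <> (1%nat,1%nat) -> fst e <> snd e) ->
  moment E xi L = diag_moment E xi 2.
Proof. intros HM H11 H2 Hnl. destruct HM as (_&_&_&_&_&_&_&_&Hv).
unfold moment. rewrite (Rprod_single _ _ (1%nat,1%nat)).
- rewrite H2 by auto. reflexivity.
- apply NoDup_nodup.
- apply nodup_In; auto.
- intros x Hx Hne. apply nodup_In in Hx. rewrite H2 by auto. unfold edge_moment.
  specialize (Hnl x Hx Hne). destruct (Nat.eqb_spec (fst x) (snd x)); [contradiction|]. auto.
Qed.

Open Scope nat_scope.

Definition is_loop (e : nat*nat) : bool := Nat.eqb (fst e) (snd e).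
Definition non_loops (L : list (nat*nat)) := filter (fun e => negb (is_loop e)) L.
Definition num_loops (L : list (nat*nat)) := length (filter is_loop L).
Definition distinct_non_loops (L : list (nat*nat)) := length (nodup pair_eq_dec (non_loops L)).

Lemma edge_sym a b : edge a b = edge b a.
Proof. unfold edge. f_equal; lia. Qed.

Lemma edge_loop a b : is_loop (edge a b) = Nat.eqb a b.
Proof. unfold is_loop, edge; simpl. destruct (Nat.eqb_spec a b); destruct (Nat.eqb_spec (Nat.min a b) (Nat.max a b)); lia. Qed.

Lemma edge_inv a b c d : edge a b = edge c d -> (a = c /\ b = d) \/ (a = d /\ b = c).
Proof. unfold edge. intros H. inversion H. lia. Qed.

Lemma edge_list_in w e : In e (edge_list w) -> exists a b, e = edge a b /\ In a w /\ In b w.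
Proof. induction w as [|a t IH]; simpl; [tauto|]. destruct t as [|b t']; [simpl; tauto|].
intros [<-|H]. exists a, b. simpl; auto. destruct (IH H) as (x&y&->&Hx&Hy). exists x, y. simpl in *; auto. Qed.

Lemma edge_list_nth w i : S i < length w -> In (edge (nth i w 0) (nth (S i) w 0)) (edge_list w).
Proof. revert i. induction w as [|a t IH]; intros i Hi; simpl in *; [lia|].
destruct t as [|b t']; simpl in *; [lia|]. destruct i as [|i]; [left; auto|].
right. apply (IH i). simpl; lia. Qed.

Lemma edge_list_length w : length (edge_list w) = length w - 1.
Proof. induction w as [|a t IH]; simpl; auto. destruct t; simpl in *; auto. rewrite IH. lia. Qed.

Lemma edge_list_app x y : x <> [] -> y <> [] ->
  edge_list (x ++ y) = edge_list x ++ edge (last x 0) (hd 0 y) :: edge_list y.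
Proof. intros Hx Hy. induction x as [|a t IH]; [contradiction|].
destruct t as [|b t'].
- simpl. destruct y; [contradiction|]. simpl. auto.
- assert (E1: edge_list ((a :: b :: t') ++ y) = edge a b :: edge_list ((b :: t') ++ y)) by reflexivity.
  assert (E2: edge_list (a :: b :: t') = edge a b :: edge_list (b :: t')) by reflexivity.
  assert (E3: last (a :: b :: t') 0 = last (b :: t') 0) by reflexivity.
  rewrite E1, E2, E3, IH by discriminate. reflexivity. Qed.

Lemma edge_list_incl_app x y : incl (edge_list x) (edge_list (x ++ y)).
Proof. destruct x as [|a t]; [intros ? []|]. destruct y as [|b y]; [rewrite app_nil_r; apply incl_refl|].
rewrite edge_list_app by discriminate. apply incl_appl, incl_refl. Qed.

Lemma edge_list_incl_app_r x y : incl (edge_list y) (edge_list (x ++ y)).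
Proof. destruct x as [|a t]; [apply incl_refl|]. destruct y as [|b y]; [intros ? []|].
rewrite edge_list_app by discriminate. apply incl_appr, incl_tl, incl_refl. Qed.

Lemma sum_delta (l : list (nat*nat)) a : NoDup l -> In a l ->
  list_sum (map (fun e => if edge_eqb e a then 1 else 0) l) = 1.
Proof. induction 1 as [|b l Hb Hl IH]; intros Ha; [contradiction|]. simpl.
destruct Ha as [->|Ha].
- rewrite edge_eqb_refl. assert (list_sum (map (fun e => if edge_eqb e a then 1 else 0) l) = 0).
  { clear IH. induction l; simpl; auto. rewrite edge_eqb_false. apply IHl. intros H; apply Hb; simpl; auto.
    inversion Hl; auto. intros ->; apply Hb; simpl; auto. }
  lia.
- rewrite edge_eqb_false by (intros ->; contradiction). simpl. apply IH; auto. Qed.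

Lemma sum_ecount (l L : list (nat*nat)) : NoDup l -> incl L l ->
  list_sum (map (fun e => ecount e L) l) = length L.
Proof. intros Hn. induction L as [|a L IH]; intros Hi.
- simpl. clear Hn Hi. induction l; simpl; auto.
- simpl. assert (Hs := sum_delta l a Hn (Hi a (or_introl eq_refl))).
  rewrite <- (IH (proj2 (incl_cons_inv Hi))).
  transitivity (list_sum (map (fun e => if edge_eqb e a then 1 else 0) l) + list_sum (map (fun e => ecount e L) l)); [|lia].
  clear. induction l; simpl; auto. rewrite ecount_cons, IHl. lia. Qed.

Lemma sum_ge2 (l : list (nat*nat)) (f : nat*nat -> nat) : (forall e, In e l -> 2 <= f e) ->
  2 * length l <= list_sum (map f l).
Proof. induction l; simpl; intros H; auto. assert (2 <= f a) by auto.
assert (2 * length l <= list_sum (map f l)) by auto. lia. Qed.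

Lemma sum_eq2 (l : list (nat*nat)) (f : nat*nat -> nat) : (forall e, In e l -> 2 <= f e) ->
  list_sum (map f l) <= 2 * length l -> forall e, In e l -> f e = 2.
Proof. induction l; simpl; intros H Hs e He; [contradiction|].
assert (2 <= f a) by auto. assert (2 * length l <= list_sum (map f l)) by (apply sum_ge2; auto).
destruct He as [<-|He]; [lia|]. apply IHl; auto. lia. Qed.

Lemma ecount_non_loops e L : is_loop e = false -> ecount e (non_loops L) = ecount e L.
Proof. intros H. induction L as [|a L IH]; simpl; auto. unfold non_loops in *; simpl.
destruct (edge_eqb e a) eqn:Ea.
- apply edge_eqb_spec in Ea; subst. rewrite H. simpl. rewrite ecount_cons, edge_eqb_refl, ecount_cons, edge_eqb_refl, IH. auto.
- rewrite (ecount_cons e a L), Ea. destruct (negb (is_loop a)); [rewrite ecount_cons, Ea|]; simpl; auto. Qed.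

Lemma non_loops_app L1 L2 : non_loops (L1 ++ L2) = non_loops L1 ++ non_loops L2.
Proof. unfold non_loops. apply filter_app. Qed.

Lemma length_non_loops L : length (non_loops L) + num_loops L = length L.
Proof. induction L; simpl; auto. unfold non_loops, num_loops in *; simpl. destruct (is_loop a); simpl; lia. Qed.

Lemma distinct_non_loops_le L : (forall e, In e (non_loops L) -> 2 <= ecount e L) -> 2 * distinct_non_loops L <= length (non_loops L).
Proof. intros H. unfold distinct_non_loops. rewrite <- (sum_ecount (nodup pair_eq_dec (non_loops L)) (non_loops L)).
- apply sum_ge2. intros e He. apply nodup_In in He. rewrite ecount_non_loops. auto.
  unfold non_loops in He. apply filter_In in He. destruct He as [_ He]. destruct (is_loop e); auto; discriminate.
- apply NoDup_nodup.
- intros x; apply nodup_In. Qed.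

Lemma distinct_non_loops_eq2 L : (forall e, In e (non_loops L) -> 2 <= ecount e L) -> length (non_loops L) <= 2 * distinct_non_loops L ->
  forall e, In e (non_loops L) -> ecount e L = 2.
Proof. intros H Hl e He. unfold distinct_non_loops in Hl.
assert (Hlp : is_loop e = false) by (unfold non_loops in He; apply filter_In in He; destruct He as [_ He]; destruct (is_loop e); auto; discriminate).
rewrite <- (ecount_non_loops e L Hlp).
apply (sum_eq2 (nodup pair_eq_dec (non_loops L)) (fun x => ecount x (non_loops L))).
- intros x Hx. apply nodup_In in Hx. 
  assert (Hlx : is_loop x = false) by (unfold non_loops in Hx; apply filter_In in Hx; destruct Hx as [_ Hx]; destruct (is_loop x); auto; discriminate).
  rewrite ecount_non_loops; auto.
- rewrite (sum_ecount _ (non_loops L)); auto. apply NoDup_nodup. intros x; apply nodup_In.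
- apply nodup_In; auto. Qed.

Lemma in_non_loops e L : In e (non_loops L) <-> In e L /\ is_loop e = false.
Proof. unfold non_loops. rewrite filter_In. destruct (is_loop e); simpl; intuition. Qed.

Lemma wt_cons_in a l : In a l -> wt (a :: l) = wt l.
Proof. intros H. unfold wt; simpl. destruct (in_dec Nat.eq_dec a l); [auto|contradiction]. Qed.

Lemma wt_cons_notin a l : ~ In a l -> wt (a :: l) = S (wt l).
Proof. intros H. unfold wt; simpl. destruct (in_dec Nat.eq_dec a l); [contradiction|auto]. Qed.

Lemma wt_incl x y : incl x y -> wt x <= wt y.
Proof. intros H. unfold wt. apply NoDup_incl_length. apply NoDup_nodup.
intros z Hz. apply nodup_In. apply H. apply nodup_In in Hz; auto. Qed.

Lemma wt_eq x y : (forall z, In z x <-> In z y) -> wt x = wt y.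
Proof. intros H. apply Nat.le_antisymm; apply wt_incl; intros z; apply H. Qed.

Lemma wt_NoDup l : NoDup l -> wt l = length l.
Proof. intros H. unfold wt. rewrite nodup_fixed_point; auto. Qed.

Lemma length_filter_split {A} (P : A -> bool) l :
  length (filter P l) + length (filter (fun z => negb (P z)) l) = length l.
Proof. induction l; simpl; auto. destruct (P a); simpl; lia. Qed.

Lemma wt_split (P : nat -> bool) l : wt l = wt (filter P l) + wt (filter (fun z => negb (P z)) l).
Proof. rewrite (wt_eq (filter P l) (filter P (nodup Nat.eq_dec l))).
rewrite (wt_eq (filter (fun z => negb (P z)) l) (filter (fun z => negb (P z)) (nodup Nat.eq_dec l))).
rewrite (wt_NoDup (filter P _)), (wt_NoDup (filter (fun z => negb (P z)) _)) by (apply NoDup_filter, NoDup_nodup).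
rewrite length_filter_split. auto.
all: intros z; rewrite !filter_In, nodup_In; tauto. Qed.

Lemma wt_le_length l : wt l <= length l.
Proof. unfold wt. apply NoDup_incl_length. apply NoDup_nodup. intros z; apply nodup_In. Qed.

Lemma wt_pos l : l <> [] -> 1 <= wt l.
Proof. destruct l as [|a l]; [contradiction|]. intros _.
assert (wt [a] = 1) by (rewrite wt_NoDup; auto; repeat constructor; auto).
assert (wt [a] <= wt (a::l)) by (apply wt_incl; intros z [<-|[]]; simpl; auto). lia. Qed.

Definition memb (z : nat) (x : list nat) : bool := existsb (Nat.eqb z) x.
Lemma memb_spec z x : memb z x = true <-> In z x.
Proof. unfold memb. rewrite existsb_exists. split; [intros [y [Hy Hz]]; apply Nat.eqb_eq in Hz; subst; auto|].
intros H; exists z; split; auto; apply Nat.eqb_refl. Qed.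

Lemma wt_app x y : wt (x ++ y) = wt x + wt (filter (fun z => negb (memb z x)) y).
Proof. rewrite (wt_split (fun z => memb z x) (x ++ y)). f_equal; apply wt_eq; intros z;
rewrite filter_In, ?filter_In, in_app_iff, ?memb_spec; destruct (memb z x) eqn:E; simpl;
try rewrite <- memb_spec; try rewrite E; intuition congruence. Qed.

Lemma wt_app_common x y a : In a x -> In a y -> wt (x ++ y) + 1 <= wt x + wt y.
Proof. intros Ha Hb. rewrite wt_app. rewrite (wt_split (fun z => memb z x) y).
assert (1 <= wt (filter (fun z => memb z x) y)).
{ assert (wt [a] = 1) by (rewrite wt_NoDup; auto; repeat constructor; auto).
  assert (wt [a] <= wt (filter (fun z => memb z x) y)); [|lia]. apply wt_incl. intros z [<-|[]].
 apply filter_In; split; auto; apply memb_spec; auto. }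
lia. Qed.

Lemma wt_app_common2 x y a b : a <> b -> In a x -> In a y -> In b x -> In b y -> wt (x ++ y) + 2 <= wt x + wt y.
Proof. intros Hab Ha Hb Ha' Hb'. rewrite wt_app. rewrite (wt_split (fun z => memb z x) y).
assert (2 <= wt (filter (fun z => memb z x) y)).
{ assert (wt [a;b] = 2) by (rewrite wt_NoDup; auto; constructor; [simpl; intuition| repeat constructor; auto]).
  assert (wt [a;b] <= wt (filter (fun z => memb z x) y)); [|lia]. apply wt_incl. intros z [<-|[<-|[]]];
 apply filter_In; split; auto; apply memb_spec; auto. }
lia. Qed.

Lemma check_cons b t : exists r, check (b :: t) = b :: r.
Proof. revert b. induction t as [|c t IH]; intros b; [exists []; auto|].
simpl. destruct (Nat.eqb_spec b c). subst. apply IH. eexists; eauto. Qed.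

Lemma check_eq a b t : check (a :: b :: t) = if Nat.eqb a b then check (b :: t) else a :: check (b :: t).
Proof. reflexivity. Qed.

Lemma In_check x w : In x (check w) <-> In x w.
Proof. induction w as [|a t IH]; [simpl; tauto|]. destruct t as [|b t]; [simpl; tauto|].
rewrite check_eq. destruct (Nat.eqb_spec a b).
- subst. rewrite IH. simpl. firstorder.
- simpl. rewrite IH. firstorder. Qed.

Lemma wt_check w : wt (check w) = wt w.
Proof. apply wt_eq. intros; apply In_check. Qed.

Lemma hd_check w : hd 0 (check w) = hd 0 w.
Proof. destruct w as [|a t]; auto. destruct (check_cons a t) as [r ->]. auto. Qed.

Lemma last_check w : last (check w) 0 = last w 0.
Proof. induction w as [|a t IH]; auto. destruct t as [|b t]; auto. rewrite check_eq.
destruct (Nat.eqb_spec a b).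
- rewrite IH. auto.
- destruct (check_cons b t) as [r Hr]. rewrite Hr in *. simpl in *. auto. Qed.

Lemma edge_list_check w : edge_list (check w) = non_loops (edge_list w).
Proof. induction w as [|a t IH]; [reflexivity|]. destruct t as [|b t]; [reflexivity|]. rewrite check_eq.
 change (edge_list (a :: b :: t)) with (edge a b :: edge_list (b :: t)).
 assert (HN: non_loops (edge a b :: edge_list (b::t)) = if Nat.eqb a b then non_loops (edge_list (b::t)) else edge a b :: non_loops (edge_list (b::t)))
   by (unfold non_loops; cbn [filter]; rewrite edge_loop; destruct (a =? b); reflexivity).
 rewrite HN. destruct (Nat.eqb_spec a b); [exact IH|].
 destruct (check_cons b t) as [r Hr]. rewrite Hr in *.
 change (edge_list (a :: b :: r)) with (edge a b :: edge_list (b :: r)). rewrite IH. reflexivity. Qed.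

Lemma length_check w : w <> [] -> length (check w) + num_loops (edge_list w) = length w.
Proof. induction w as [|a t IH]; intros Hw; [contradiction|]. destruct t as [|b t]; [reflexivity|]. rewrite check_eq.
 change (edge_list (a :: b :: t)) with (edge a b :: edge_list (b :: t)).
 assert (HN: num_loops (edge a b :: edge_list (b::t)) = (if Nat.eqb a b then 1 else 0) + num_loops (edge_list (b::t)))
   by (unfold num_loops; cbn [filter]; rewrite edge_loop; destruct (a =? b); reflexivity).
 rewrite HN. specialize (IH ltac:(discriminate)).
 destruct (Nat.eqb_spec a b); cbn [length] in *; lia. Qed.

Lemma last_default (l : list nat) d d' : l <> [] -> last l d = last l d'.
Proof. induction l as [|a t IH]; intros H; [contradiction|]. destruct t; auto. simpl. apply IH; discriminate. Qed.

Lemma closedb_spec w : closedb w = true <-> (w <> [] /\ hd 0 w = last w 0).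
Proof. destruct w as [|a t].
- cbn. split; [discriminate| intros [H _]; contradiction].
- unfold closedb. rewrite Nat.eqb_eq. rewrite (last_default (a::t) a 0) by discriminate. cbn [hd].
  split; [intros; split; [discriminate|auto]| intros [_ H]; auto]. Qed.

Lemma check_nil w : check w = [] -> w = [].
Proof. destruct w as [|a t]; auto. destruct (check_cons a t) as [r ->]. discriminate. Qed.

Lemma closed_check w : closedb w = true -> closedb (check w) = true.
Proof. rewrite !closedb_spec, hd_check, last_check. intros [H1 H2]; split; auto.
intros H. apply check_nil in H. contradiction. Qed.

(** * Spanning trees of words *)

Fixpoint first_index (v : nat) (l : list nat) : nat :=
  match l with [] => 0 | x :: t => if Nat.eqb x v then 0 else S (first_index v t) end.

Lemma first_index_lt v l : In v l -> first_index v l < length l.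
Proof. induction l as [|x t IH]; simpl; [tauto|]. destruct (Nat.eqb_spec x v); [lia|]. intros [->|H]; [congruence|]. specialize (IH H); lia. Qed.

Lemma nth_first_index v l : In v l -> nth (first_index v l) l 0 = v.
Proof. induction l as [|x t IH]; simpl; [tauto|]. destruct (Nat.eqb_spec x v); auto. intros [->|H]; [congruence|]. auto. Qed.

Lemma first_index_min v l i : i < length l -> nth i l 0 = v -> first_index v l <= i.
Proof. revert i; induction l as [|x t IH]; intros i Hi Hn; simpl in *; [lia|]. destruct (Nat.eqb_spec x v); [lia|].
destruct i as [|i]; [congruence|]. specialize (IH i ltac:(lia) Hn). lia. Qed.

Lemma first_index_zero v l : In v l -> first_index v l = 0 -> v = hd 0 l.
Proof. destruct l as [|x t]; simpl; [tauto|]. destruct (Nat.eqb_spec x v); auto. discriminate. Qed.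

(* The letter preceding the first occurrence of [v] in [u]; the edges [parent_edge v u],
   [v] ranging over the non-root letters, form a spanning tree of the skeleton of [u]. *)
Definition parent (v : nat) (u : list nat) : nat := nth (first_index v u - 1) u 0.
Definition parent_edge (v : nat) (u : list nat) : nat*nat := edge (parent v u) v.
Definition non_root_letters (u : list nat) : list nat := filter (fun v => negb (Nat.eqb v (hd 0 u))) (nodup Nat.eq_dec u).

Lemma non_root_letters_spec u v : In v (non_root_letters u) <-> In v u /\ v <> hd 0 u.
Proof. unfold non_root_letters. rewrite filter_In, nodup_In. destruct (Nat.eqb_spec v (hd 0 u)); simpl; split; intros [? ?]; try split; auto; congruence. Qed.

Lemma parent_props u v : In v u -> v <> hd 0 u ->
  In (parent v u) u /\ first_index (parent v u) u < first_index v u /\ parent v u <> v /\ In (parent_edge v u) (edge_list u)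
  /\ is_loop (parent_edge v u) = false.
Proof. intros Hv Hh. assert (Hp := first_index_lt v u Hv). assert (Hn := nth_first_index v u Hv).
assert (H0 : first_index v u <> 0) by (intros H; apply Hh; apply first_index_zero; auto).
assert (Hm : first_index (parent v u) u <= first_index v u - 1) by (apply first_index_min; unfold parent; auto; lia).
assert (Hne : parent v u <> v). { intros He. assert (first_index v u <= first_index v u - 1). { rewrite <- He at 1. auto. } lia. }
repeat split; auto.
- unfold parent. apply nth_In. lia.
- lia.
- unfold parent_edge. replace (parent v u) with (nth (first_index v u - 1) u 0) by auto.
  replace v with (nth (S (first_index v u - 1)) u 0) at 2 by (replace (S (first_index v u - 1)) with (first_index v u) by lia; auto).
  apply edge_list_nth. lia.
- unfold parent_edge. rewrite edge_loop. apply Nat.eqb_neq; auto. Qed.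

Lemma parent_edge_inj u v v' : In v (non_root_letters u) -> In v' (non_root_letters u) -> parent_edge v u = parent_edge v' u -> v = v'.
Proof. intros Hv Hv' He. apply non_root_letters_spec in Hv, Hv'. destruct Hv, Hv'.
destruct (parent_props u v) as (_&P1&_); auto. destruct (parent_props u v') as (_&P2&_); auto.
unfold parent_edge in He. apply edge_inv in He. destruct He as [[_ ?]|[Ha Hb]]; auto.
rewrite <- Hb in P2. rewrite Ha in P1. lia. Qed.

Lemma filter_eq_notin (l : list nat) h : ~ In h l -> length (filter (fun v => Nat.eqb v h) l) = 0.
Proof. induction l as [|x t IH]; simpl; auto. intros H. destruct (Nat.eqb_spec x h); [exfalso; apply H; auto|]. apply IH. auto. Qed.

Lemma filter_eq_one (l : list nat) h : NoDup l -> In h l -> length (filter (fun v => Nat.eqb v h) l) = 1.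
Proof. induction 1 as [|x t Hx Hnd IH]; simpl; [tauto|]. intros Hh. destruct (Nat.eqb_spec x h).
- subst. simpl. rewrite filter_eq_notin; auto.
- apply IH. destruct Hh; [congruence|auto]. Qed.

Lemma length_non_root_letters u : u <> [] -> length (non_root_letters u) + 1 = wt u.
Proof. intros Hu. unfold non_root_letters, wt. rewrite <- (length_filter_split (fun v => Nat.eqb v (hd 0 u)) (nodup Nat.eq_dec u)).
rewrite filter_eq_one. lia. apply NoDup_nodup. apply nodup_In; destruct u; [contradiction|simpl; auto]. Qed.

Lemma parent_edges_incl u : incl (map (fun v => parent_edge v u) (non_root_letters u)) (nodup pair_eq_dec (non_loops (edge_list u))).
Proof. intros e He. apply in_map_iff in He. destruct He as [v [<- Hv]]. apply non_root_letters_spec in Hv. destruct Hv.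
destruct (parent_props u v) as (_&_&_&H1&H2); auto. apply nodup_In, in_non_loops. auto. Qed.

Lemma parent_edges_NoDup u : NoDup (map (fun v => parent_edge v u) (non_root_letters u)).
Proof. apply NoDup_map_NoDup_ForallPairs; [intros ? ? ? ?; eapply parent_edge_inj; eauto|]. apply NoDup_filter, NoDup_nodup. Qed.

Lemma wt_le_distinct_non_loops u : u <> [] -> wt u <= 1 + distinct_non_loops (edge_list u).
Proof. intros Hu. rewrite <- length_non_root_letters by auto. unfold distinct_non_loops.
rewrite <- (length_map (fun v => parent_edge v u)). assert (H := NoDup_incl_length (parent_edges_NoDup u) (parent_edges_incl u)). lia. Qed.

Lemma tree_edge_is_parent_edge u : u <> [] -> 1 + distinct_non_loops (edge_list u) <= wt u ->
  forall e, In e (non_loops (edge_list u)) -> exists v, In v (non_root_letters u) /\ e = parent_edge v u.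
Proof. intros Hu Hd e He. rewrite <- length_non_root_letters in Hd by auto. unfold distinct_non_loops in Hd.
assert (Hl : length (nodup pair_eq_dec (non_loops (edge_list u))) <= length (map (fun v => parent_edge v u) (non_root_letters u)))
  by (rewrite length_map; lia).
assert (H := NoDup_length_incl (parent_edges_NoDup u) Hl (parent_edges_incl u)).
assert (He' : In e (nodup pair_eq_dec (non_loops (edge_list u)))) by (apply nodup_In; auto).
apply H in He'. apply in_map_iff in He'. destruct He' as [v [<- Hv]]. eauto. Qed.

(** * Parity of closed walks on a tree *)

Definition incident (v : nat) (e : nat*nat) : bool := negb (is_loop e) && (Nat.eqb (fst e) v || Nat.eqb (snd e) v).
Definition delta (x v : nat) : nat := if Nat.eqb x v then 1 else 0.

Lemma incident_edge v a b : incident v (edge a b) = negb (Nat.eqb a b) && (Nat.eqb a v || Nat.eqb b v).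
Proof. unfold incident. rewrite edge_loop. f_equal. unfold edge; simpl.
destruct (Nat.eqb_spec a v), (Nat.eqb_spec b v), (Nat.eqb_spec (Nat.min a b) v), (Nat.eqb_spec (Nat.max a b) v); simpl; auto; lia. Qed.

Lemma walk_parity w v : w <> [] ->
  Nat.Even (length (filter (incident v) (edge_list w)) + delta (hd 0 w) v + delta (last w 0) v).
Proof. induction w as [|a t IH]; intros Hw; [contradiction|]. destruct t as [|b t].
- exists (delta a v). cbn. lia.
- specialize (IH ltac:(discriminate)). destruct IH as [m Hm].
  change (edge_list (a :: b :: t)) with (edge a b :: edge_list (b :: t)).
  change (last (a :: b :: t) 0) with (last (b :: t) 0).
  cbn [filter hd]. cbn [hd] in Hm. rewrite incident_edge. unfold delta in *.
  destruct (Nat.eqb_spec a b); destruct (Nat.eqb_spec a v); destruct (Nat.eqb_spec b v); cbn [negb andb orb length] in *;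
  first [exists m; lia | exists (S m); lia | lia]. Qed.

Lemma sum_incident_ecount (EU L : list (nat*nat)) v : NoDup EU -> (forall e, In e L -> incident v e = true -> In e EU) ->
  list_sum (map (fun e => if incident v e then ecount e L else 0) EU) = length (filter (incident v) L).
Proof. intros Hn. induction L as [|a L IH]; intros Hi.
- simpl. clear. induction EU; simpl; auto. destruct (incident v a); simpl; auto.
- assert (IH' := IH (fun e H => Hi e (or_intror H))).
  transitivity ((if incident v a then 1 else 0) + list_sum (map (fun e => if incident v e then ecount e L else 0) EU)).
  + assert (Hd : list_sum (map (fun e => if incident v e then (if edge_eqb e a then 1 else 0) else 0) EU) = if incident v a then 1 else 0).
    { destruct (incident v a) eqn:Ea.
      - transitivity (list_sum (map (fun e => if edge_eqb e a then 1 else 0) EU)); [|apply (sum_delta EU a Hn (Hi a (or_introl eq_refl) Ea))].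
        f_equal. apply map_ext_in. intros e He.
        destruct (edge_eqb e a) eqn:Ee; [apply edge_eqb_spec in Ee; rewrite Ee, Ea; auto|]. destruct (incident v e); auto.
      - clear Hi IH IH' Hn. induction EU; simpl; auto. rewrite IHEU. destruct (edge_eqb a0 a) eqn:Ee;
        [apply edge_eqb_spec in Ee; rewrite Ee, Ea; auto|]. destruct (incident v a0); auto. }
    rewrite <- Hd. clear. induction EU as [|x EU IHe]; simpl; auto. rewrite IHe, ecount_cons. destruct (incident v x); lia.
  + rewrite IH'. simpl. destruct (incident v a); simpl; auto. Qed.

Lemma split_sum (l : list (nat*nat)) g d : NoDup l -> In d l ->
  list_sum (map g l) = g d + list_sum (map (fun e => if edge_eqb e d then 0 else g e) l).
Proof. induction 1 as [|x l Hx Hnd IH]; intros Hd; [contradiction|]. simpl. destruct Hd as [->|Hd].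
- rewrite edge_eqb_refl.
  assert (list_sum (map g l) = list_sum (map (fun e => if edge_eqb e d then 0 else g e) l)); [|lia].
  f_equal. apply map_ext_in. intros e He. rewrite edge_eqb_false; auto. intros ->; contradiction.
- rewrite edge_eqb_false by (intros ->; contradiction). rewrite IH; auto. lia. Qed.

Lemma sum_even (l : list (nat*nat)) g : (forall e, In e l -> Nat.Even (g e)) -> Nat.Even (list_sum (map g l)).
Proof. induction l; simpl; intros H. exists 0; auto. destruct (H a (or_introl eq_refl)) as [m1 H1].
destruct (IHl (fun e He => H e (or_intror He))) as [m2 H2]. exists (m1 + m2). lia. Qed.

(* Induction from the leaves: a closed walk crosses the edges at [v] an even number of times,
   and all those edges except [parent_edge v u] lead to letters discovered after [v]. *)
Lemma tree_parity u w : u <> [] -> 1 + distinct_non_loops (edge_list u) <= wt u -> closedb w = true ->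
  incl (edge_list w) (edge_list u) -> forall e, In e (non_loops (edge_list w)) -> Nat.Even (ecount e (edge_list w)).
Proof.
  intros Hu Ht Hw Hi.
  set (EU := nodup pair_eq_dec (non_loops (edge_list u))).
  assert (Hmain : forall n v, length u - first_index v u <= n -> In v (non_root_letters u) -> Nat.Even (ecount (parent_edge v u) (edge_list w))).
  { induction n as [|n IHn]; intros v Hn Hv; apply non_root_letters_spec in Hv as Hv'; destruct Hv' as [Hvu Hvh];
    assert (Hpl := first_index_lt v u Hvu); [lia|].
    destruct (parent_props u v Hvu Hvh) as (Hp1&Hp2&Hp3&Hp4&Hp5).
    assert (HdEU : In (parent_edge v u) EU) by (apply nodup_In, in_non_loops; auto).
    assert (HS : list_sum (map (fun e => if incident v e then ecount e (edge_list w) else 0) EU) = length (filter (incident v) (edge_list w))).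
    { apply sum_incident_ecount. apply NoDup_nodup. intros e He Hie. apply nodup_In, in_non_loops. split; auto.
      unfold incident in Hie. destruct (is_loop e); auto. }
    assert (HE : Nat.Even (length (filter (incident v) (edge_list w)))).
    { apply closedb_spec in Hw. destruct Hw as [Hw1 Hw2]. destruct (walk_parity w v Hw1) as [m Hm].
      rewrite Hw2 in Hm. exists (m - delta (last w 0) v). lia. }
    rewrite <- HS in HE. rewrite (split_sum EU _ (parent_edge v u)) in HE; [|apply NoDup_nodup|auto].
    assert (Hinc : incident v (parent_edge v u) = true).
    { unfold parent_edge. rewrite incident_edge. destruct (Nat.eqb_spec (parent v u) v); [contradiction|]. rewrite Nat.eqb_refl. apply orb_true_r. }
    rewrite Hinc in HE.
    assert (Hrest : Nat.Even (list_sum (map (fun e => if edge_eqb e (parent_edge v u) then 0 else (if incident v e then ecount e (edge_list w) else 0)) EU))).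
    { apply sum_even. intros e He. destruct (edge_eqb e (parent_edge v u)) eqn:Ee; [exists 0; auto|].
      destruct (incident v e) eqn:Ie; [|exists 0; auto].
      apply nodup_In in He. destruct (tree_edge_is_parent_edge u Hu Ht e He) as [x [Hx ->]].
      unfold parent_edge in Ie at 1. rewrite incident_edge in Ie. apply non_root_letters_spec in Hx as Hx'. destruct Hx' as [Hxu Hxh].
      destruct (parent_props u x Hxu Hxh) as (_&Hq2&_).
      destruct (Nat.eqb_spec x v).
      - subst. rewrite edge_eqb_refl in Ee. discriminate.
      - destruct (Nat.eqb_spec (parent x u) v); [|cbn [negb andb orb] in Ie; rewrite andb_false_r in Ie; discriminate].
        subst v. apply IHn; auto. lia. }
    destruct HE as [m1 H1]. destruct Hrest as [m2 H2]. exists (m1 - m2). lia. }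
  intros e He. assert (He' : In e (non_loops (edge_list u))). { apply in_non_loops in He. apply in_non_loops. destruct He; split; auto. }
  destruct (tree_edge_is_parent_edge u Hu Ht e He') as [x [Hx ->]]. apply (Hmain (length u)); auto. lia.
Qed.

(** * Words contributing at leading order *)

Definition V_word (k : nat) (w : list nat) : Prop :=
  length w = S k /\ hd 0 w = 1 /\ closedb w = true /\ has_self_edge w = true /\ (forall x, In x w -> 1 <= x).

(* The words of [Vset N (2h+1)] that contribute at leading order; up to equivalence
   they are the words counted by [a_k] ([top_word_ak_word], [ak_word_top_word]). *)
Definition top_word (h : nat) (w : list nat) : Prop :=
  ecount (1,1) (edge_list w) = 1 /\
  (forall e, In e (edge_list w) -> e <> (1,1) -> is_loop e = false /\ 2 <= ecount e (edge_list w)) /\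
  wt w = S h.

Lemma filter_length_mono {A} (P Q : A -> bool) l : (forall x, P x = true -> Q x = true) ->
  length (filter P l) <= length (filter Q l).
Proof. intros H. induction l; simpl; auto. destruct (P a) eqn:E; [rewrite (H a E); simpl; lia|]. destruct (Q a); simpl; lia. Qed.

Lemma ecount_loop_le e L : is_loop e = true -> ecount e L <= num_loops L.
Proof. intros H. apply filter_length_mono. intros x Hx. apply edge_eqb_spec in Hx; subst; auto. Qed.

Lemma two_loops_num_loops e1 e2 L : In e1 L -> In e2 L -> e1 <> e2 -> is_loop e1 = true -> is_loop e2 = true -> 2 <= num_loops L.
Proof. intros H1 H2 Hne L1 L2. unfold num_loops. change 2 with (length [e1; e2]). apply NoDup_incl_length.
constructor; [simpl; intuition|repeat constructor; auto]. intros x [<-|[<-|[]]]; apply filter_In; auto. Qed.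

Lemma has_self_edge_loop w : has_self_edge w = true -> exists e, In e (edge_list w) /\ is_loop e = true.
Proof. unfold has_self_edge. rewrite existsb_exists. intros [e [H1 H2]]. exists e; auto. Qed.

Lemma V_word_props k w : V_word k w -> w <> [] /\ last w 0 = 1 /\ length (edge_list w) = k /\ 1 <= num_loops (edge_list w).
Proof. intros (H1&H2&H3&H4&H5). apply closedb_spec in H3 as [Hne Hl]. repeat split; auto.
- congruence.
- rewrite edge_list_length. lia.
- destruct (has_self_edge_loop w H4) as [e [He Le]]. unfold num_loops. destruct (filter is_loop (edge_list w)) eqn:E; simpl; [|lia].
  assert (In e (filter is_loop (edge_list w))) by (apply filter_In; auto). rewrite E in H. contradiction. Qed.

Lemma is_loop_11 : is_loop (1,1) = true. Proof. reflexivity. Qed.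

Lemma num_loops_only11 L : (forall e, In e L -> e <> (1,1) -> is_loop e = false) -> num_loops L = ecount (1,1) L.
Proof. intros H. unfold num_loops, ecount. induction L as [|a L IH]; simpl; auto.
destruct (pair_eq_dec a (1,1)).
- subst. simpl. rewrite IH; auto. intros; apply H; simpl; auto.
- rewrite (H a (or_introl eq_refl) n). rewrite edge_eqb_false by auto. apply IH. intros; apply H; simpl; auto. Qed.

Lemma non_loops_ecount_pos e L : In e (non_loops L) -> 1 <= ecount e L.
Proof. intros H. apply in_non_loops in H. apply ecount_pos. tauto. Qed.

Lemma wt_le_of_paired k h w : V_word k w -> k = 2 * h + 1 ->
  (forall e, In e ((1,1) :: edge_list w) -> 2 <= ecount e ((1,1) :: edge_list w)) ->
  wt w <= S h /\ (wt w = S h -> top_word h w).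
Proof.
  intros HV Hk Hc. destruct (V_word_props k w HV) as (Hne&Hlast&Hlen&Hs).
  assert (H11 : 1 <= ecount (1,1) (edge_list w)). { specialize (Hc (1,1) (or_introl eq_refl)). rewrite ecount_cons, edge_eqb_refl in Hc. lia. }
  assert (Hc' : forall e, In e (edge_list w) -> e <> (1,1) -> 2 <= ecount e (edge_list w)).
  { intros e He Hne'. specialize (Hc e (or_intror He)). rewrite ecount_cons, edge_eqb_false in Hc; auto. }
  assert (Hnl : forall e, In e (non_loops (edge_list w)) -> 2 <= ecount e (edge_list w)).
  { intros e He. apply in_non_loops in He. destruct He as [He Le]. apply Hc'; auto. intros ->. discriminate. }
  assert (HD := distinct_non_loops_le (edge_list w) Hnl). assert (HN := length_non_loops (edge_list w)). assert (Hcon := wt_le_distinct_non_loops w Hne).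
  assert (H11L : ecount (1,1) (edge_list w) <= num_loops (edge_list w)) by (apply ecount_loop_le; auto).
  split; [lia|]. intros Hw.
  assert (Hs1 : num_loops (edge_list w) = 1) by lia.
  split; [lia|]. split; [|auto].
  intros e He Hne'. split; [|apply Hc'; auto].
  destruct (is_loop e) eqn:Le; auto. exfalso.
  assert (In (1,1) (edge_list w)) by (destruct (in_dec pair_eq_dec (1,1) (edge_list w)); auto; rewrite ecount_notin in H11; auto; lia).
  assert (2 <= num_loops (edge_list w)) by (apply (two_loops_num_loops e (1,1)); auto). lia.
Qed.

Lemma top_word_ecount_two k h w : V_word k w -> k = 2 * h + 1 -> top_word h w ->
  forall e, In e (edge_list w) -> e <> (1,1) -> ecount e (edge_list w) = 2.
Proof.
  intros HV Hk (G1&G2&G3). destruct (V_word_props k w HV) as (Hne&Hlast&Hlen&Hs).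
  assert (Hnl : num_loops (edge_list w) = 1) by (rewrite num_loops_only11; auto; intros; apply G2; auto).
  assert (Hnl2 : forall e, In e (non_loops (edge_list w)) -> 2 <= ecount e (edge_list w)).
  { intros e He. apply in_non_loops in He. destruct He as [He Le]. apply G2; auto. intros ->. discriminate. }
  assert (HN := length_non_loops (edge_list w)). assert (Hcon := wt_le_distinct_non_loops w Hne).
  intros e He Hne'. apply (distinct_non_loops_eq2 (edge_list w) Hnl2). lia. apply in_non_loops. split; auto. apply G2; auto.
Qed.

Lemma top_word_ak_word k h w : V_word k w -> k = 2 * h + 1 -> top_word h w -> ak_word k w.
Proof.
  intros HV Hk HG. assert (HV' := HV). destruct HV' as (H1&H2&H3&H4&H5). destruct HG as (G1&G2&G3).
  destruct (V_word_props k w HV) as (Hne&Hlast&Hlen&Hs).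
  assert (Hnl : num_loops (edge_list w) = 1) by (rewrite num_loops_only11; auto; intros; apply G2; auto).
  assert (Hlc := length_check w Hne).
  unfold ak_word. repeat split; auto; try lia.
  - apply closed_check; auto.
  - intros e He. unfold Eset in He. apply nodup_In in He. unfold Nmult. rewrite edge_list_check in *.
    apply in_non_loops in He as [He Le]. fold (ecount e (non_loops (edge_list w))). rewrite ecount_non_loops by auto.
    apply G2; auto. intros ->; discriminate.
  - rewrite wt_check. lia.
Qed.

Lemma ak_word_top_word k h w : V_word k w -> k = 2 * h + 1 -> ak_word k w -> top_word h w.
Proof.
  intros HV Hk HA. destruct HA as (A1&A2&A3&A4&A5&(W1&W2&W3)&A7).
  destruct (V_word_props k w HV) as (Hne&Hlast&Hlen&Hs).
  assert (Hlc := length_check w Hne).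
  assert (Hnl : num_loops (edge_list w) = 1) by lia.
  assert (H11 : In (1,1) (edge_list w)). { destruct (in_dec pair_eq_dec (1,1) (edge_list w)); auto.
    unfold Nmult in A5. fold (ecount (1,1) (edge_list w)) in A5. rewrite ecount_notin in A5; auto. discriminate. }
  split; [exact A5|]. split.
  - intros e He Hne'. assert (Le : is_loop e = false).
    { destruct (is_loop e) eqn:Le; auto. assert (2 <= num_loops (edge_list w)) by (apply (two_loops_num_loops e (1,1)); auto). lia. }
    split; auto. assert (HeC : In e (Eset (check w))).
    { unfold Eset. apply nodup_In. rewrite edge_list_check. apply in_non_loops; auto. }
    specialize (W2 e HeC). unfold Nmult in W2. rewrite edge_list_check in W2. fold (ecount e (non_loops (edge_list w))) in W2.
    rewrite ecount_non_loops in W2; auto.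
  - rewrite wt_check in W3. lia.
Qed.

Definition top_pair (h : nat) (w w' : list nat) : Prop :=
  top_word h w /\ top_word h w' /\ (forall y, In y w -> In y w' -> y = 1).

Lemma common_edge_is_11 w w' e : In e (edge_list w) -> In e (edge_list w') ->
  (forall y, In y w -> In y w' -> y = 1) -> e = (1,1).
Proof. intros H1 H2 Hc. destruct (edge_list_in w e H1) as (a&b&He&Ha&Hb).
destruct (edge_list_in w' e H2) as (c&d&He'&Hc'&Hd). rewrite He in He'.
assert (a = 1 /\ b = 1). { apply edge_inv in He'. destruct He' as [[-> ->]|[-> ->]]; split; apply Hc; auto. }
destruct H; subst. reflexivity. Qed.

Lemma top_pair_ecounts k h w w' : V_word k w -> V_word k w' -> k = 2 * h + 1 -> top_pair h w w' ->
  In (1,1) (edge_list w ++ edge_list w') /\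
  (forall e, In e (edge_list w ++ edge_list w') -> ecount e (edge_list w ++ edge_list w') = 2) /\
  (forall e, In e (edge_list w ++ edge_list w') -> e <> (1,1) -> fst e <> snd e).
Proof.
  intros HV HV' Hk (G&G'&Hc).
  assert (In (1,1) (edge_list w)). { destruct (in_dec pair_eq_dec (1,1) (edge_list w)); auto. destruct G as [G1 _].
    rewrite ecount_notin in G1; auto; discriminate. }
  split; [apply in_or_app; auto|]. split.
  - intros e He. rewrite ecount_app. destruct (pair_eq_dec e (1,1)) as [->|Hne].
    + destruct G as [G1 _]; destruct G' as [G1' _]. lia.
    + apply in_app_or in He. destruct He as [He|He].
      * rewrite (top_word_ecount_two k h w HV Hk G e He Hne). rewrite ecount_notin; auto. intros He'. apply Hne. apply (common_edge_is_11 w w' e He He' Hc).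
      * rewrite (top_word_ecount_two k h w' HV' Hk G' e He Hne). rewrite (ecount_notin e (edge_list w)); auto. intros He'. apply Hne.
        apply (common_edge_is_11 w w' e He' He Hc).
  - intros e He Hne. assert (is_loop e = false).
    { apply in_app_or in He. destruct He as [He|He]; [apply (proj1 (proj2 G) e He Hne)|apply (proj1 (proj2 G') e He Hne)]. }
    unfold is_loop in H0. apply Nat.eqb_neq; auto.
Qed.

Lemma top_word_intro k h w w2 : V_word k w -> num_loops (edge_list w) = 1 ->
  (forall e, In e (edge_list w) -> is_loop e = true -> In e (edge_list w2)) ->
  (forall y, In y w -> In y w2 -> y = 1) ->
  (forall e, In e (non_loops (edge_list w)) -> 2 <= ecount e (edge_list w)) -> wt w = S h -> top_word h w.
Proof.
  intros HV Hnl Hlp Hc Hnc Hw. assert (HV' := HV). destruct HV' as (_&_&_&Hse&_).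
  destruct (has_self_edge_loop w Hse) as [e0 [He0 Le0]].
  assert (He0' := Hlp e0 He0 Le0).
  assert (E0 : e0 = (1,1)) by (apply (common_edge_is_11 w w2 e0 He0 He0' Hc)). subst e0.
  assert (H1 := ecount_pos _ _ He0). assert (H2 := ecount_loop_le (1,1) (edge_list w) is_loop_11).
  split; [lia|]. split; [|auto].
  intros e He Hne. destruct (is_loop e) eqn:Le.
  - assert (2 <= num_loops (edge_list w)) by (apply (two_loops_num_loops e (1,1)); auto). lia.
  - split; auto. apply Hnc. apply in_non_loops; auto.
Qed.

Lemma non_loops_cons11 L : non_loops ((1,1) :: L) = non_loops L.
Proof. reflexivity. Qed.

Lemma V_word_in1 k w : V_word k w -> In 1 w.
Proof. intros (_&Hh&Hc&_). apply closedb_spec in Hc as [Hne _]. destruct w; [contradiction|]. simpl in *; auto. Qed.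

Lemma edge_list_V_word_app k w w' : V_word k w -> V_word k w' ->
  edge_list (w ++ w') = edge_list w ++ (1,1) :: edge_list w'.
Proof.
  intros HV HV'. destruct (V_word_props k w HV) as (Hne&Hlast&_). destruct (V_word_props k w' HV') as (Hne'&_).
  destruct HV' as (_&Hh1&_). rewrite edge_list_app by auto. rewrite Hlast, Hh1. reflexivity.
Qed.

Lemma loop_in_other L L' : num_loops L = 1 ->
  (forall e, In e L -> 2 <= ecount e L + ecount e L') ->
  forall e, In e L -> is_loop e = true -> In e L'.
Proof.
  intros Hx Hxy e He Le. destruct (in_dec pair_eq_dec e L') as [|Hn]; auto. exfalso.
  specialize (Hxy e He). rewrite (ecount_notin e L' Hn) in Hxy.
  assert (ecount e L <= num_loops L) by (apply ecount_loop_le; auto). lia.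
Qed.

Lemma closed_walk_in_tree_paired u w : u <> [] -> 1 + distinct_non_loops (edge_list u) <= wt u ->
  closedb w = true -> incl (edge_list w) (edge_list u) ->
  forall e, In e (non_loops (edge_list w)) -> 2 <= ecount e (edge_list w).
Proof.
  intros Hu Ht Hw Hi e He. destruct (tree_parity u w Hu Ht Hw Hi e He) as [m Hm].
  assert (H1 := non_loops_ecount_pos _ _ He). lia.
Qed.

Lemma share_only_1_of_wt w w' : In 1 w -> In 1 w' -> wt w + wt w' <= wt (w ++ w') + 1 ->
  forall y, In y w -> In y w' -> y = 1.
Proof.
  intros H1 H1' Hwt y Hy Hy'. destruct (Nat.eq_dec y 1) as [|Hy1]; auto. exfalso.
  assert (H := wt_app_common2 w w' 1 y ltac:(auto) H1 H1' Hy Hy'). lia.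
Qed.

(* If [w ++ w'] had weight larger than [2h], its skeleton would be a tree (the step joining
   [w] to [w'] is the loop [{1,1}]); each of the closed walks [w], [w'] then traverses each of
   its non-loop edges an even number of times, which forces [top_pair h w w']. *)
Lemma wt_app_le_of_paired k h w w' : V_word k w -> V_word k w' -> k = 2 * h + 1 -> ~ top_pair h w w' ->
  (forall e, In e (edge_list w ++ edge_list w') -> 2 <= ecount e (edge_list w ++ edge_list w')) ->
  wt (w ++ w') <= 2 * h.
Proof.
  intros HV HV' Hk HnA Hc.
  destruct (V_word_props k w HV) as (Hne&_&Hlen&Hs).
  destruct (V_word_props k w' HV') as (Hne'&_&Hlen'&Hs').
  assert (Hu := edge_list_V_word_app k w w' HV HV').
  assert (Hune : w ++ w' <> []) by (destruct w; [contradiction|discriminate]).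
  assert (HNL : non_loops (edge_list (w ++ w')) = non_loops (edge_list w) ++ non_loops (edge_list w')).
  { rewrite Hu, non_loops_app, non_loops_cons11. reflexivity. }
  assert (Hnl : forall e, In e (non_loops (edge_list (w ++ w'))) -> 2 <= ecount e (edge_list (w ++ w'))).
  { intros e He. apply in_non_loops in He as [He Le]. rewrite Hu in He |- *.
    assert (H2 : 2 <= ecount e (edge_list w ++ edge_list w')).
    { apply Hc. apply in_app_or in He. apply in_or_app. destruct He as [He|[He|He]]; auto. subst; discriminate. }
    rewrite ecount_app in H2 |- *. rewrite ecount_cons, edge_eqb_false by (intros ->; discriminate). lia. }
  assert (HD := distinct_non_loops_le _ Hnl). rewrite HNL, length_app in HD.
  assert (HN := length_non_loops (edge_list w)). assert (HN' := length_non_loops (edge_list w')).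
  assert (Hcon := wt_le_distinct_non_loops (w ++ w') Hune).
  destruct (le_lt_dec (wt (w ++ w')) (2 * h)) as [Hok|Hbig]; auto. exfalso. apply HnA.
  assert (Hsw : num_loops (edge_list w) = 1) by lia.
  assert (Hsw' : num_loops (edge_list w') = 1) by lia.
  assert (Htree : 1 + distinct_non_loops (edge_list (w ++ w')) <= wt (w ++ w')) by lia.
  assert (Hge := closed_walk_in_tree_paired (w ++ w') w Hune Htree (proj1 (proj2 (proj2 HV)))
                   (edge_list_incl_app w w')).
  assert (Hge' := closed_walk_in_tree_paired (w ++ w') w' Hune Htree (proj1 (proj2 (proj2 HV')))
                   (edge_list_incl_app_r w w')).
  assert (HDw := distinct_non_loops_le _ Hge). assert (HDw' := distinct_non_loops_le _ Hge').
  assert (Hconw := wt_le_distinct_non_loops w Hne). assert (Hconw' := wt_le_distinct_non_loops w' Hne').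
  assert (Hcm := wt_app_common w w' 1 (V_word_in1 k w HV) (V_word_in1 k w' HV')).
  assert (Hcommon := share_only_1_of_wt w w' (V_word_in1 k w HV) (V_word_in1 k w' HV') ltac:(lia)).
  split; [|split; auto].
  - apply (top_word_intro k h w w'); auto; [|lia].
    apply loop_in_other; auto. intros e He. rewrite <- ecount_app. apply Hc. apply in_or_app; auto.
  - apply (top_word_intro k h w' w); auto; [|lia].
    apply loop_in_other; auto. intros e He. rewrite Nat.add_comm, <- ecount_app. apply Hc. apply in_or_app; auto.
Qed.

Lemma wt_le_of_self_paired k h w : V_word k w -> k = 2 * h + 1 ->
  (forall e, In e (edge_list w) -> 2 <= ecount e (edge_list w)) -> wt w <= h.
Proof. intros HV Hk Hc. destruct (V_word_props k w HV) as (Hne&Hlast&Hlen&Hs).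
assert (HV' := HV). destruct HV' as (_&_&_&Hse&_). destruct (has_self_edge_loop w Hse) as [e0 [He0 Le0]].
assert (2 <= num_loops (edge_list w)). { specialize (Hc e0 He0). assert (ecount e0 (edge_list w) <= num_loops (edge_list w)) by (apply ecount_loop_le; auto). lia. }
assert (Hnl : forall e, In e (non_loops (edge_list w)) -> 2 <= ecount e (edge_list w)) by (intros e He; apply Hc; apply in_non_loops in He; tauto).
assert (HD := distinct_non_loops_le _ Hnl). assert (HN := length_non_loops (edge_list w)). assert (Hcon := wt_le_distinct_non_loops w Hne). lia. Qed.

Lemma wt_app_le_of_self_paired k h w w' : V_word k w -> V_word k w' -> k = 2 * h + 1 ->
  (forall e, In e (edge_list w) -> 2 <= ecount e (edge_list w)) ->
  (forall e, In e (edge_list w') -> 2 <= ecount e (edge_list w')) -> wt (w ++ w') <= 2 * h.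
Proof. intros HV HV' Hk H1 H2. assert (A1 := wt_le_of_self_paired k h w HV Hk H1). assert (A2 := wt_le_of_self_paired k h w' HV' Hk H2).
destruct (V_word_props k w HV) as (Hne&_). destruct (V_word_props k w' HV') as (Hne'&_).
assert (H1w : In 1 w) by (destruct HV as (_&X&_); destruct w; [contradiction|simpl in *; auto]).
assert (H1w' : In 1 w') by (destruct HV' as (_&X&_); destruct w'; [contradiction|simpl in *; auto]).
assert (Hcm := wt_app_common w w' 1 H1w H1w'). lia. Qed.

(** * Counting words *)

Lemma words_S N m : words N (S m) = flat_map (fun w => map (fun a => a :: w) (seq 1 N)) (words N m).
Proof. reflexivity. Qed.

Lemma in_words N m w : In w (words N m) <-> length w = m /\ (forall x, In x w -> 1 <= x <= N).
Proof. revert w. induction m as [|m IH]; intros w; simpl.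
- split. intros [<-|[]]; simpl; split; auto; tauto. intros [H _]. destruct w; [auto|discriminate].
- rewrite in_flat_map. split.
  + intros [w' [Hw' Ha]]. apply in_map_iff in Ha. destruct Ha as [a [<- Ha]]. apply in_seq in Ha.
    apply IH in Hw'. destruct Hw'. simpl. split; [lia|]. intros x [<-|Hx]; [lia|auto].
  + intros [Hl Hx]. destruct w as [|a w']; [discriminate|]. exists w'. split.
    * apply IH. simpl in Hl. split; [lia|]. intros; apply Hx; simpl; auto.
    * apply in_map_iff. exists a. split; auto. apply in_seq. specialize (Hx a (or_introl eq_refl)). lia. Qed.

Lemma length_filter_flat_map {A B} (P : B -> bool) (g : A -> list B) l :
  length (filter P (flat_map g l)) = list_sum (map (fun x => length (filter P (g x))) l).
Proof. induction l; simpl; auto. rewrite filter_app, length_app, IHl. auto. Qed.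

Lemma length_filter_map {A B} (P : B -> bool) (g : A -> B) l :
  length (filter P (map g l)) = length (filter (fun x => P (g x)) l).
Proof. induction l; simpl; auto. destruct (P (g a)); simpl; auto. Qed.

Lemma list_sum_le {A} (f g : A -> nat) l : (forall x, In x l -> f x <= g x) -> list_sum (map f l) <= list_sum (map g l).
Proof. induction l; simpl; intros H; auto. assert (f a <= g a) by auto. assert (list_sum (map f l) <= list_sum (map g l)) by auto. lia. Qed.

Lemma list_sum_plus {A} (f g : A -> nat) l : list_sum (map (fun x => f x + g x) l) = list_sum (map f l) + list_sum (map g l).
Proof. induction l; simpl; auto. rewrite IHl. lia. Qed.

Lemma list_sum_scal {A} (f : A -> nat) c l : list_sum (map (fun x => c * f x) l) = c * list_sum (map f l).
Proof. induction l; simpl; auto. rewrite IHl. lia. Qed.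

Lemma list_sum_ind {A} (P : A -> bool) l : list_sum (map (fun x => if P x then 1 else 0) l) = length (filter P l).
Proof. induction l; simpl; auto. destruct (P a); simpl; lia. Qed.

Lemma wt_perm_mid pre a w : wt (pre ++ a :: w) = wt (a :: pre ++ w).
Proof. apply wt_eq. intros z. rewrite in_app_iff. simpl. rewrite in_app_iff. tauto. Qed.

Lemma count_in_seq N S : length (filter (fun a => memb a S) (seq 1 N)) <= wt S.
Proof. unfold wt. apply NoDup_incl_length. apply NoDup_filter, seq_NoDup.
intros z Hz. apply filter_In in Hz. destruct Hz as [_ Hz]. apply memb_spec in Hz. apply nodup_In; auto. Qed.

Lemma count_notin_seq N S : N - length S <= length (filter (fun a => negb (memb a S)) (seq 1 N)).
Proof. assert (H := length_filter_split (fun a => memb a S) (seq 1 N)). rewrite length_seq in H.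
assert (H2 := count_in_seq N S). assert (wt S <= length S) by apply wt_le_length. lia. Qed.

Lemma count_extensions_bound N pre w T :
  length (filter (fun a => wt (pre ++ a :: w) <=? T) (seq 1 N)) <=
  T * (if wt (pre ++ w) <=? T then 1 else 0) + N * (if S (wt (pre ++ w)) <=? T then 1 else 0).
Proof.
  rewrite <- list_sum_ind.
  eapply Nat.le_trans.
  - apply (list_sum_le _ (fun a => (if wt (pre ++ w) <=? T then 1 else 0) * (if memb a (pre ++ w) then 1 else 0)
                                  + (if S (wt (pre ++ w)) <=? T then 1 else 0))).
    intros a _. rewrite wt_perm_mid. destruct (memb a (pre ++ w)) eqn:Em.
    + apply memb_spec in Em. rewrite wt_cons_in by auto. destruct (_ <=? T); simpl; lia.
    + rewrite wt_cons_notin. destruct (_ <=? T); simpl; lia. intros Hc; apply memb_spec in Hc; congruence.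
  - rewrite list_sum_plus, list_sum_scal, list_sum_ind.
    assert (Hc := count_in_seq N (pre ++ w)).
    assert (Hs : list_sum (map (fun _ : nat => if S (wt (pre ++ w)) <=? T then 1 else 0) (seq 1 N)) =
                 N * (if S (wt (pre ++ w)) <=? T then 1 else 0)).
    { generalize (if S (wt (pre ++ w)) <=? T then 1 else 0). intros c. rewrite <- (length_seq N 1) at 2.
      generalize (seq 1 N). intros l; induction l as [|x l IHl]; simpl; lia. }
    rewrite Hs. destruct (wt (pre ++ w) <=? T) eqn:E; [apply Nat.leb_le in E|]; nia.
Qed.

Lemma count_low_weight_words N m T pre : 1 <= N ->
  N ^ wt pre * length (filter (fun w => wt (pre ++ w) <=? T) (words N m)) <= (S T) ^ m * N ^ T.
Proof.
  intros HN. revert T. induction m as [|m IH]; intros T.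
  - simpl. rewrite app_nil_r. destruct (Nat.leb_spec (wt pre) T); simpl.
    + rewrite Nat.mul_1_r, Nat.add_0_r. apply Nat.pow_le_mono_r; lia.
    + lia.
  - rewrite words_S, length_filter_flat_map.
    destruct T as [|T].
    + assert (list_sum (map (fun x => length (filter (fun w => wt (pre ++ w) <=? 0) (map (fun a => a :: x) (seq 1 N)))) (words N m)) = 0).
      { assert (Z : forall x l, length (filter (fun w => wt (pre ++ w) <=? 0) (map (fun a => a :: x) l)) = 0).
        { intros x l. induction l as [|a l IHl]; simpl; auto.
          assert (1 <= wt (pre ++ a :: x)) by (apply wt_pos; destruct pre; discriminate).
          destruct (Nat.leb_spec (wt (pre ++ a :: x)) 0); [lia|]. auto. }
        generalize (words N m). intros l. induction l as [|x l IHl]; simpl; auto. rewrite Z, IHl. auto. }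
      rewrite H. lia.
    + assert (Hb : list_sum (map (fun x => length (filter (fun w => wt (pre ++ w) <=? S T) (map (fun a => a :: x) (seq 1 N)))) (words N m))
                 <= S T * length (filter (fun w => wt (pre ++ w) <=? S T) (words N m)) + N * length (filter (fun w => wt (pre ++ w) <=? T) (words N m))).
      { eapply Nat.le_trans.
        - apply (list_sum_le _ (fun x => S T * (if wt (pre ++ x) <=? S T then 1 else 0) + N * (if wt (pre ++ x) <=? T then 1 else 0))).
          intros x _.
          rewrite length_filter_map. eapply Nat.le_trans. apply count_extensions_bound.
          destruct (Nat.leb_spec (wt (pre ++ x)) (S T)), (Nat.leb_spec (S (wt (pre ++ x))) (S T)), (Nat.leb_spec (wt (pre ++ x)) T); lia.
        - rewrite list_sum_plus, !list_sum_scal, !list_sum_ind. lia. }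
      specialize (IH (S T)) as IH1. specialize (IH T) as IH2.
      assert (HT : S T ^ m <= S (S T) ^ m) by (apply Nat.pow_le_mono_l; lia).
      assert (HNp : N * N ^ T = N ^ S T) by (simpl; auto).
      simpl (S (S T) ^ S m).
      nia.
Qed.

(** * Words with a prescribed equality pattern *)

Definition matchP (Z : list (nat*nat)) : Prop :=
  forall u v, In u Z -> In v Z -> (fst u = fst v <-> snd u = snd v).
Definition matchb (Z : list (nat*nat)) : bool :=
  forallb (fun u => forallb (fun v => Bool.eqb (Nat.eqb (fst u) (fst v)) (Nat.eqb (snd u) (snd v))) Z) Z.

Lemma matchb_spec Z : matchb Z = true <-> matchP Z.
Proof. unfold matchb, matchP. rewrite forallb_forall. split.
- intros H u v Hu Hv. specialize (H u Hu). rewrite forallb_forall in H. specialize (H v Hv).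
  apply eqb_prop in H. destruct (Nat.eqb_spec (fst u) (fst v)), (Nat.eqb_spec (snd u) (snd v)); try discriminate; tauto.
- intros H u Hu. rewrite forallb_forall. intros v Hv. specialize (H u v Hu Hv).
  destruct (Nat.eqb_spec (fst u) (fst v)), (Nat.eqb_spec (snd u) (snd v)); simpl; tauto. Qed.

Lemma matchP_ext Z Z' : (forall x, In x Z <-> In x Z') -> (matchP Z <-> matchP Z').
Proof. intros H. unfold matchP. split; intros M u v Hu Hv; apply M; apply H; auto. Qed.

Lemma matchP_cons a x Z : matchP ((a,x) :: Z) <-> matchP Z /\ (forall v, In v Z -> (a = fst v <-> x = snd v)).
Proof. unfold matchP. split.
- intros M. split. intros; apply M; simpl; auto. intros v Hv. apply (M (a,x) v); simpl; auto.
- intros [M H] u v [<-|Hu] [<-|Hv]; simpl.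
  + tauto.
  + apply H; auto.
  + specialize (H u Hu). split; intros E; symmetry; apply H; auto.
  + apply M; auto. Qed.

Lemma combine_app (l1 l2 l3 l4 : list nat) : length l1 = length l2 ->
  combine (l1 ++ l3) (l2 ++ l4) = combine l1 l2 ++ combine l3 l4.
Proof. revert l2. induction l1 as [|a l1 IH]; intros [|b l2] H; simpl in *; try discriminate; auto.
rewrite IH; auto. Qed.

Lemma map_fst_combine (l1 l2 : list nat) : length l1 = length l2 -> map fst (combine l1 l2) = l1.
Proof. revert l2. induction l1 as [|a l1 IH]; intros [|b l2] H; simpl in *; try discriminate; auto. rewrite IH; auto. Qed.

Lemma map_snd_combine (l1 l2 : list nat) : length l1 = length l2 -> map snd (combine l1 l2) = l2.
Proof. revert l2. induction l1 as [|a l1 IH]; intros [|b l2] H; simpl in *; try discriminate; auto. rewrite IH; auto. Qed.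

Lemma matchb_cons_b a x Z : matchb ((a,x)::Z) = matchb Z && forallb (fun v => Bool.eqb (a =? fst v) (x =? snd v)) Z.
Proof. destruct (matchb ((a,x)::Z)) eqn:E; symmetry.
- apply matchb_spec, matchP_cons in E. destruct E as [E1 E2]. apply andb_true_iff. split. apply matchb_spec; auto.
  apply forallb_forall. intros v Hv. specialize (E2 v Hv). destruct (Nat.eqb_spec a (fst v)), (Nat.eqb_spec x (snd v)); simpl; tauto.
- destruct (matchb Z) eqn:E1; simpl; auto. destruct (forallb _ Z) eqn:E3; auto. exfalso.
  assert (matchP ((a,x)::Z)); [|apply matchb_spec in H; congruence].
  apply matchP_cons. split. apply matchb_spec; auto. intros v Hv. rewrite forallb_forall in E3. specialize (E3 v Hv).
  apply eqb_prop in E3. destruct (Nat.eqb_spec a (fst v)), (Nat.eqb_spec x (snd v)); try discriminate; tauto. Qed.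

Definition avoidb (X w : list nat) : bool := forallb (fun a => negb (memb a X)) w.

Lemma avoidb_spec X w : avoidb X w = true <-> (forall a, In a w -> ~ In a X).
Proof. unfold avoidb. rewrite forallb_forall. split; intros H a Ha; specialize (H a Ha).
- intros Hx. apply memb_spec in Hx. rewrite Hx in H. discriminate.
- destruct (memb a X) eqn:E; auto. apply memb_spec in E. contradiction. Qed.

Fixpoint new_letters (ppre p : list nat) : nat :=
  match p with [] => 0 | x :: q => new_letters ppre q + (if memb x (ppre ++ q) then 0 else 1) end.

(* The number of continuations [w] of [pre] such that [pre ++ w] has the same equality
   pattern as [ppre ++ p] and [w] avoids the letters of [X]. *)
Definition count_matching (N : nat) (X pre ppre p : list nat) : nat :=
  length (filter (fun w => matchb (combine (pre ++ w) (ppre ++ p)) && avoidb X w) (words N (length p))).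

Lemma count_eq_one N (q : nat -> bool) c : 1 <= c <= N -> (forall a, q a = true <-> a = c) ->
  length (filter q (seq 1 N)) = 1.
Proof. intros Hc Hq. rewrite (filter_ext_in q (fun a => Nat.eqb a c)).
- apply filter_eq_one. apply seq_NoDup. apply in_seq. lia.
- intros a _. destruct (q a) eqn:E, (Nat.eqb_spec a c); auto; apply Hq in E || apply Hq in e; congruence. Qed.

Lemma count_ge_le N (q : nat -> bool) S : (forall a, q a = true <-> ~ In a S) ->
  N - length S <= length (filter q (seq 1 N)) <= N.
Proof. intros Hq. rewrite (filter_ext_in q (fun a => negb (memb a S))). split.
- apply count_notin_seq.
- rewrite <- (length_seq N 1) at 2. apply filter_length_le.
- intros a _. destruct (q a) eqn:E, (memb a S) eqn:E2; auto.
  + apply Hq in E. apply memb_spec in E2. contradiction.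
  + assert (~ In a S) by (intros H; apply memb_spec in H; congruence). apply Hq in H. congruence. Qed.

Definition extendb (Z : list (nat*nat)) (X : list nat) (x a : nat) : bool :=
  forallb (fun v => Bool.eqb (a =? fst v) (x =? snd v)) Z && negb (memb a X).

Lemma matchb_extend pre ppre w p a x : length pre = length ppre ->
  matchb (combine (pre ++ a :: w) (ppre ++ x :: p)) = matchb ((a,x) :: combine (pre ++ w) (ppre ++ p)).
Proof.
  intros Hl. apply eq_true_iff_eq. rewrite !matchb_spec. apply matchP_ext. intros y.
  rewrite !combine_app by auto. simpl. rewrite !in_app_iff. simpl. tauto.
Qed.

Lemma extendb_old N Z X x : matchP Z -> (forall y, In y (map fst Z) -> 1 <= y <= N /\ ~ In y X) ->
  In x (map snd Z) -> length (filter (extendb Z X x) (seq 1 N)) = 1.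
Proof.
  intros HM HZ Hx. apply in_map_iff in Hx. destruct Hx as [v0 [Hv0 Hv0Z]].
  assert (Hc := HZ (fst v0) (in_map fst _ _ Hv0Z)).
  apply (count_eq_one N _ (fst v0)); [tauto|].
  intros a. unfold extendb. rewrite andb_true_iff, forallb_forall, negb_true_iff. split.
  - intros [H _]. specialize (H v0 Hv0Z). rewrite Hv0, Nat.eqb_refl in H.
    destruct (Nat.eqb_spec a (fst v0)); auto; discriminate.
  - intros ->. split.
    + intros v Hv. specialize (HM v0 v Hv0Z Hv). rewrite Hv0 in HM.
      destruct (Nat.eqb_spec (fst v0) (fst v)), (Nat.eqb_spec x (snd v)); simpl; tauto.
    + destruct (memb (fst v0) X) eqn:E; auto. apply memb_spec in E. exfalso. apply (proj2 Hc); auto.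
Qed.

Lemma extendb_new N Z X x : ~ In x (map snd Z) ->
  N - (length X + length Z) <= length (filter (extendb Z X x) (seq 1 N)) <= N.
Proof.
  intros Hxn. assert (HS := count_ge_le N (extendb Z X x) (X ++ map fst Z)).
  rewrite length_app, length_map in HS. apply HS.
  intros a. unfold extendb. rewrite andb_true_iff, forallb_forall, negb_true_iff, in_app_iff. split.
  - intros [H1 H2] [Ha|Ha]; [apply memb_spec in Ha; congruence|].
    apply in_map_iff in Ha. destruct Ha as [v [Hv HvZ]].
    specialize (H1 v HvZ). rewrite Hv, Nat.eqb_refl in H1. destruct (Nat.eqb_spec x (snd v)); [|discriminate].
    apply Hxn. apply in_map_iff. exists v; auto.
  - intros Hn. split.
    + intros v Hv. destruct (Nat.eqb_spec a (fst v)).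
      { exfalso. apply Hn. right. subst. apply in_map; auto. }
      destruct (Nat.eqb_spec x (snd v)); auto. exfalso. apply Hxn. subst. apply in_map; auto.
    + destruct (memb a X) eqn:E; auto. apply memb_spec in E. exfalso; apply Hn; auto.
Qed.

Lemma count_matching_step N X pre ppre x p w : length pre = length ppre -> length w = length p ->
  (forall y, In y pre -> 1 <= y <= N /\ ~ In y X) -> (forall y, In y w -> 1 <= y <= N) ->
  let b := matchb (combine (pre ++ w) (ppre ++ p)) && avoidb X w in
  let g := length (filter (fun a => matchb (combine (pre ++ a :: w) (ppre ++ x :: p)) && avoidb X (a :: w)) (seq 1 N)) in
  (memb x (ppre ++ p) = true -> g = if b then 1 else 0) /\
  (memb x (ppre ++ p) = false -> (if b then N - (length X + length pre + length p) else 0) <= g <= (if b then N else 0)).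
Proof.
  intros Hl Hw Hpre Hwl b g.
  set (Z := combine (pre ++ w) (ppre ++ p)).
  assert (Hlz : length (pre ++ w) = length (ppre ++ p)) by (rewrite !length_app; lia).
  assert (Hfst := map_fst_combine _ _ Hlz). assert (Hsnd := map_snd_combine _ _ Hlz). fold Z in Hfst, Hsnd.
  assert (HlZ : length Z = length pre + length p) by (rewrite <- (length_map fst Z), Hfst, length_app; lia).
  unfold g. rewrite (filter_ext_in _ (fun a => b && extendb Z X x a)).
  2:{ intros a _. rewrite matchb_extend by auto. unfold b, extendb. fold Z. rewrite matchb_cons_b. unfold avoidb. simpl.
      destruct (matchb Z), (forallb _ Z), (memb a X), (forallb _ w); reflexivity. }
  destruct b eqn:Eb; cbn [andb].
  2:{ assert (Z0 : forall l, length (filter (fun _ : nat => false) l) = 0) by (induction l; simpl; auto).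
      rewrite Z0. split; intros; lia. }
  unfold b in Eb. apply andb_prop in Eb. destruct Eb as [Eb1 Eb2]. apply matchb_spec in Eb1. rewrite avoidb_spec in Eb2.
  split; intros Hx.
  - apply extendb_old; auto.
    + intros y Hy. rewrite Hfst in Hy. apply in_app_or in Hy as [Hy|Hy]; [apply Hpre; auto|].
      split; [apply Hwl | apply Eb2]; auto.
    + rewrite Hsnd. apply memb_spec; auto.
  - assert (Hxn : ~ In x (map snd Z)) by (rewrite Hsnd; intros H; apply memb_spec in H; congruence).
    destruct (extendb_new N Z X x Hxn) as [H1 H2]. rewrite HlZ in H1. split; [|exact H2].
    eapply Nat.le_trans; [|exact H1]. lia.
Qed.

Lemma count_matching_cons N X pre ppre x p : count_matching N X pre ppre (x :: p) =
  list_sum (map (fun w => length (filter (fun a => matchb (combine (pre ++ a :: w) (ppre ++ x :: p))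
                                                   && avoidb X (a :: w)) (seq 1 N))) (words N (length p))).
Proof.
  unfold count_matching. cbn [length]. rewrite words_S, length_filter_flat_map.
  f_equal. apply map_ext. intros w. apply length_filter_map.
Qed.

Section CountMatchingStep.

Variables (N : nat) (X pre ppre : list nat) (x : nat) (p : list nat).
Hypothesis Hl : length pre = length ppre.
Hypothesis Hpre : forall y, In y pre -> 1 <= y <= N /\ ~ In y X.

Lemma count_matching_cons_old : memb x (ppre ++ p) = true ->
  count_matching N X pre ppre (x :: p) = count_matching N X pre ppre p.
Proof.
  intros Hx. rewrite count_matching_cons. unfold count_matching. rewrite <- list_sum_ind.
  f_equal. apply map_ext_in. intros w Hw. apply in_words in Hw as [Hw1 Hw2].
  apply (proj1 (count_matching_step N X pre ppre x p w Hl Hw1 Hpre Hw2)); auto.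
Qed.

Lemma count_matching_cons_new : memb x (ppre ++ p) = false ->
  (N - (length X + length pre + length p)) * count_matching N X pre ppre p <= count_matching N X pre ppre (x :: p)
  <= N * count_matching N X pre ppre p.
Proof.
  intros Hx. rewrite count_matching_cons. unfold count_matching. rewrite <- list_sum_ind, <- !list_sum_scal.
  split; apply list_sum_le; intros w Hw; apply in_words in Hw as [Hw1 Hw2];
    destruct (proj2 (count_matching_step N X pre ppre x p w Hl Hw1 Hpre Hw2) Hx);
    destruct (matchb _ && avoidb X w); lia.
Qed.

End CountMatchingStep.

Lemma count_matching_bounds N X pre ppre p : length pre = length ppre -> matchP (combine pre ppre) ->
  (forall y, In y pre -> 1 <= y <= N /\ ~ In y X) ->
  (N - (length X + length pre + length p)) ^ (new_letters ppre p) <= count_matching N X pre ppre p /\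
  count_matching N X pre ppre p <= N ^ (new_letters ppre p).
Proof.
  intros Hl HM Hpre. induction p as [|x p [IH1 IH2]].
  - unfold count_matching. simpl. rewrite !app_nil_r.
    assert (matchb (combine pre ppre) = true) by (apply matchb_spec; auto). rewrite H. simpl. lia.
  - cbn [new_letters length]. destruct (memb x (ppre ++ p)) eqn:Em.
    + rewrite count_matching_cons_old, Nat.add_0_r by auto. split; auto.
      eapply Nat.le_trans; [|apply IH1]. apply Nat.pow_le_mono_l. lia.
    + destruct (count_matching_cons_new N X pre ppre x p Hl Hpre Em) as [L U].
      rewrite !Nat.pow_add_r, !Nat.pow_1_r. split.
      * eapply Nat.le_trans; [|exact L]. rewrite Nat.mul_comm. apply Nat.mul_le_mono; [lia|].
        eapply Nat.le_trans; [|exact IH1]. apply Nat.pow_le_mono_l. lia.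
      * eapply Nat.le_trans; [exact U|]. rewrite (Nat.mul_comm N). apply Nat.mul_le_mono; lia.
Qed.

Lemma new_letters_wt ppre p : new_letters ppre p + wt ppre = wt (ppre ++ p).
Proof. induction p as [|x p IH]; simpl. rewrite app_nil_r; auto.
rewrite wt_perm_mid. destruct (memb x (ppre ++ p)) eqn:E.
- apply memb_spec in E. rewrite wt_cons_in; auto. lia.
- rewrite wt_cons_notin. lia. intros H; apply memb_spec in H; congruence. Qed.

(** * Equivalence of words *)

Definition equivN (w r : list nat) : Prop :=
  length w = length r /\ forall i j, i < length w -> j < length w -> (nth i w 0 = nth j w 0 <-> nth i r 0 = nth j r 0).

Definition injOn (f : nat -> nat) (w : list nat) : Prop := forall x y, In x w -> In y w -> f x = f y -> x = y.

Lemma nth_map0 (f : nat -> nat) w i : i < length w -> nth i (map f w) 0 = f (nth i w 0).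
Proof. intros H. rewrite (nth_indep _ 0 (f 0)) by (rewrite length_map; auto). apply map_nth. Qed.

Lemma equiv_words_N w r : equiv_words w r <-> equivN w r.
Proof. split.
- intros [f [Hi <-]]. split; [rewrite length_map; auto|]. intros i j Hi' Hj'.
  rewrite !nth_map0 by auto. split; [intros ->; auto|].
  apply Hi; apply nth_In; auto.
- intros [Hl H]. exists (fun x => nth (first_index x w) r 0). split.
  + intros x y Hx Hy Hf. rewrite <- (nth_first_index x w Hx), <- (nth_first_index y w Hy). apply H; auto; apply first_index_lt; auto.
  + apply (nth_ext _ _ 0 0). rewrite length_map; auto. intros n Hn. rewrite length_map in Hn.
    rewrite nth_map0 by auto.
    apply H; auto. apply first_index_lt. apply nth_In; auto. apply nth_first_index. apply nth_In; auto. Qed.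

Lemma equivN_sym w r : equivN w r -> equivN r w.
Proof. intros [Hl H]. split; auto. intros i j Hi Hj. rewrite <- Hl in Hi, Hj. symmetry. apply H; auto. Qed.

Lemma equivN_trans w r s : equivN w r -> equivN r s -> equivN w s.
Proof. intros [Hl H] [Hl' H']. split; [lia|]. intros i j Hi Hj. rewrite H by auto. apply H'; lia. Qed.

Lemma in_combine_nth (w r : list nat) z : length w = length r ->
  (In z (combine w r) <-> exists i, i < length w /\ z = (nth i w 0, nth i r 0)).
Proof. revert r. induction w as [|a w IH]; intros [|b r] Hl; simpl in *; try discriminate.
- split; [tauto|]. intros [i [Hi _]]; lia.
- rewrite IH by lia. split.
  + intros [<-|[i [Hi ->]]]. exists 0; split; auto; lia. exists (S i); split; auto; lia.
  + intros [[|i] [Hi ->]]. left; auto. right. exists i. split; auto; lia. Qed.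

Lemma equivN_match w r : equivN w r <-> length w = length r /\ matchP (combine w r).
Proof. split.
- intros [Hl H]. split; auto. intros u v Hu Hv. apply in_combine_nth in Hu, Hv; auto.
  destruct Hu as [i [Hi ->]], Hv as [j [Hj ->]]. simpl. apply H; auto.
- intros [Hl H]. split; auto. intros i j Hi Hj.
  apply (H (nth i w 0, nth i r 0) (nth j w 0, nth j r 0)); apply in_combine_nth; eauto. Qed.

Definition equivb (w r : list nat) : bool := Nat.eqb (length w) (length r) && matchb (combine w r).

Lemma equivb_spec w r : equivb w r = true <-> equiv_words w r.
Proof. rewrite equiv_words_N, equivN_match. unfold equivb. rewrite andb_true_iff, Nat.eqb_eq, matchb_spec. tauto. Qed.

Definition map_edge (f : nat -> nat) (e : nat*nat) : nat*nat := edge (f (fst e)) (f (snd e)).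

Lemma map_edge_edge f a b : map_edge f (edge a b) = edge (f a) (f b).
Proof. unfold map_edge. assert (H1 : fst (edge a b) = Nat.min a b) by reflexivity. assert (H2 : snd (edge a b) = Nat.max a b) by reflexivity.
rewrite H1, H2. destruct (Nat.le_ge_cases a b).
- rewrite Nat.min_l, Nat.max_r by auto. auto.
- rewrite Nat.min_r, Nat.max_l by auto. apply edge_sym. Qed.

Lemma edge_list_map f w : edge_list (map f w) = map (map_edge f) (edge_list w).
Proof. induction w as [|a t IH]; auto. destruct t as [|b t]; auto.
change (edge_list (map f (a :: b :: t))) with (edge (f a) (f b) :: edge_list (map f (b :: t))).
change (edge_list (a :: b :: t)) with (edge a b :: edge_list (b :: t)). simpl map at 2. rewrite map_edge_edge, IH. auto. Qed.

Lemma map_edge_inj f w e1 e2 : injOn f w -> In e1 (edge_list w) -> In e2 (edge_list w) -> map_edge f e1 = map_edge f e2 -> e1 = e2.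
Proof. intros Hi H1 H2 He. destruct (edge_list_in w e1 H1) as (a1&b1&->&Ha1&Hb1).
destruct (edge_list_in w e2 H2) as (a2&b2&->&Ha2&Hb2). rewrite !map_edge_edge in He. apply edge_inv in He.
destruct He as [[E1 E2]|[E1 E2]]; apply Hi in E1; apply Hi in E2; auto; subst; auto. apply edge_sym. Qed.

Lemma ecount_map f w e L : injOn f w -> In e (edge_list w) -> incl L (edge_list w) ->
  ecount (map_edge f e) (map (map_edge f) L) = ecount e L.
Proof. intros Hi He HL. induction L as [|x L IH]; auto. simpl. rewrite !ecount_cons, IH by (intros y Hy; apply HL; simpl; auto).
f_equal. destruct (edge_eqb e x) eqn:E.
- apply edge_eqb_spec in E. subst. rewrite edge_eqb_refl. auto.
- destruct (edge_eqb (map_edge f e) (map_edge f x)) eqn:E2; auto. apply edge_eqb_spec in E2. apply map_edge_inj with (w := w) in E2; auto.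
  subst. rewrite edge_eqb_refl in E. discriminate. apply HL; simpl; auto. Qed.

Lemma is_loop_map_edge f w e : injOn f w -> In e (edge_list w) -> is_loop (map_edge f e) = is_loop e.
Proof. intros Hi He. destruct (edge_list_in w e He) as (a&b&->&Ha&Hb). rewrite map_edge_edge, !edge_loop.
destruct (Nat.eqb_spec a b) as [Hab|Hab], (Nat.eqb_spec (f a) (f b)) as [Hf|Hf]; auto.
all: try (subst; exfalso; apply Hf; reflexivity); try (exfalso; apply Hab; apply Hi; auto). Qed.

Lemma wt_map f w : injOn f w -> wt (map f w) = wt w.
Proof. intros Hi. rewrite (wt_eq (map f w) (map f (nodup Nat.eq_dec w))).
- rewrite wt_NoDup. rewrite length_map. auto. apply NoDup_map_NoDup_ForallPairs; [|apply NoDup_nodup].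
  intros x y Hx Hy. apply Hi; apply nodup_In in Hx, Hy; auto.
- intros z. rewrite !in_map_iff. split; intros [x [<- Hx]]; exists x; split; auto; apply nodup_In in Hx || apply nodup_In; auto. Qed.

Lemma hd_map f w : w <> [] -> hd 0 (map f w) = f (hd 0 w).
Proof. destruct w; [contradiction|auto]. Qed.

Lemma last_map f w : w <> [] -> last (map f w) 0 = f (last w 0).
Proof. induction w as [|a t IH]; intros H; [contradiction|]. destruct t as [|b t]; auto.
change (map f (a :: b :: t)) with (f a :: map f (b :: t)). change (last (a :: b :: t) 0) with (last (b :: t) 0).
rewrite <- IH by discriminate. simpl. destruct (map f t); auto. Qed.

Lemma last_In (w : list nat) : w <> [] -> In (last w 0) w.
Proof. induction w as [|a t IH]; intros H; [contradiction|]. destruct t as [|b t]; simpl; auto.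
right. apply IH. discriminate. Qed.

Lemma hd_In (w : list nat) : w <> [] -> In (hd 0 w) w.
Proof. destruct w; [contradiction|simpl; auto]. Qed.

Lemma closedb_map f w : injOn f w -> closedb (map f w) = closedb w.
Proof. intros Hi. destruct w as [|a t]; auto. destruct (closedb (a :: t)) eqn:E.
- apply closedb_spec in E. apply closedb_spec. destruct E as [E1 E2]. split; [discriminate|].
  rewrite hd_map, last_map by auto. congruence.
- destruct (closedb (map f (a :: t))) eqn:E2; auto. apply closedb_spec in E2. rewrite hd_map, last_map in E2 by discriminate.
  destruct E2 as [_ E2]. apply Hi in E2; try (apply hd_In || apply last_In); try discriminate.
  assert (closedb (a :: t) = true) by (apply closedb_spec; split; auto; discriminate). congruence. Qed.

Lemma has_self_edge_map f w : injOn f w -> has_self_edge (map f w) = has_self_edge w.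
Proof. intros Hi. unfold has_self_edge. rewrite edge_list_map.
assert (H : forall L, incl L (edge_list w) -> existsb (fun e => fst e =? snd e) (map (map_edge f) L) = existsb (fun e => fst e =? snd e) L).
{ induction L as [|x L IH]; intros HL; simpl; auto. rewrite IH by (intros y Hy; apply HL; simpl; auto).
  f_equal. apply (is_loop_map_edge f w x Hi). apply HL; simpl; auto. }
apply H. apply incl_refl. Qed.

Lemma top_word_map_inv h f w : injOn f w -> In 1 w -> f 1 = 1 -> top_word h (map f w) -> top_word h w.
Proof. intros Hi H1 Hf1 (G1&G2&G3). rewrite edge_list_map in G1, G2. rewrite wt_map in G3 by auto.
assert (He11 : forall L, incl L (edge_list w) -> ecount (1,1) (map (map_edge f) L) = ecount (1,1) L).
{ intros L HL. destruct (in_dec pair_eq_dec (1,1) (edge_list w)) as [Hin|Hnin].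
  - assert (map_edge f (1,1) = (1,1)) by (unfold map_edge; simpl; rewrite Hf1; reflexivity).
    rewrite <- H at 1. apply (ecount_map f w); auto.
  - rewrite (ecount_notin (1,1) L) by (intros Hc; apply Hnin; apply HL; auto).
    apply ecount_notin. intros Hc. apply in_map_iff in Hc. destruct Hc as [e [He HeL]].
    apply HL in HeL. destruct (edge_list_in w e HeL) as (a&b&->&Ha&Hb). rewrite map_edge_edge in He.
    change (1,1) with (edge 1 1) in He. apply edge_inv in He. assert (a = 1 /\ b = 1) by (destruct He as [[E1 E2]|[E1 E2]]; rewrite <- Hf1 in E1, E2; split; apply Hi; auto).
    destruct H; subst. apply Hnin. apply HeL. }
split; [rewrite <- He11 by apply incl_refl; auto|]. split; auto.
intros e He Hne. assert (Hfe : map_edge f e <> (1,1)).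
{ intros Hc. apply Hne. destruct (edge_list_in w e He) as (a&b&->&Ha&Hb). rewrite map_edge_edge in Hc.
  unfold edge in Hc. injection Hc as C1 C2. assert (E1 : f a = f 1) by lia. assert (E2 : f b = f 1) by lia.
  apply Hi in E1; apply Hi in E2; auto. rewrite E1, E2. reflexivity. }
destruct (G2 (map_edge f e) (in_map _ _ _ He) Hfe) as [L1 L2]. split.
- rewrite <- (is_loop_map_edge f w e Hi He). auto.
- rewrite <- (ecount_map f w e (edge_list w)); auto. apply incl_refl. Qed.

Lemma equiv_words_invariants h w r : equiv_words w r -> hd 0 w = 1 -> hd 0 r = 1 ->
  closedb r = closedb w /\ has_self_edge r = has_self_edge w /\ (top_word h r -> top_word h w).
Proof. intros [f [Hi <-]] Hh Hr. split; [apply closedb_map; auto|]. split; [apply has_self_edge_map; auto|].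
destruct w as [|a t]. intros _. exfalso. simpl in Hh. discriminate.
simpl in Hh, Hr. subst a. apply top_word_map_inv; simpl; auto. Qed.

Definition top_wordb (h : nat) (w : list nat) : bool :=
  Nat.eqb (ecount (1,1) (edge_list w)) 1 &&
  forallb (fun e => edge_eqb e (1,1) || (negb (is_loop e) && Nat.leb 2 (ecount e (edge_list w)))) (edge_list w) &&
  Nat.eqb (wt w) (S h).

Lemma top_wordb_spec h w : top_wordb h w = true <-> top_word h w.
Proof. unfold top_wordb, top_word. rewrite !andb_true_iff, !Nat.eqb_eq, forallb_forall. split.
- intros [[H1 H2] H3]. split; auto. split; auto. intros e He Hne. specialize (H2 e He).
  rewrite edge_eqb_false in H2 by auto. rewrite orb_false_l in H2. apply andb_true_iff in H2. destruct H2 as [A B].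
  apply negb_true_iff in A. apply Nat.leb_le in B. auto.
- intros [H1 [H2 H3]]. split; auto. split; auto. intros e He. destruct (pair_eq_dec e (1,1)) as [->|Hne].
  rewrite edge_eqb_refl; auto. rewrite edge_eqb_false by auto. rewrite orb_false_l. destruct (H2 e He Hne) as [A B].
  rewrite A. rewrite andb_true_l. apply Nat.leb_le; auto. Qed.

Lemma ak_word_V_word k r : ak_word k r -> V_word k r.
Proof. intros (A1&A2&A3&A4&A5&_). repeat split; auto; try lia.
unfold has_self_edge. apply existsb_exists. exists (1,1). split; [|reflexivity].
unfold Nmult in A5. destruct (in_dec pair_eq_dec (1,1) (edge_list r)); auto.
fold (ecount (1,1) (edge_list r)) in A5. rewrite ecount_notin in A5; auto. discriminate. Qed.

Lemma count_equiv_le1 (l : list (list nat)) w :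
  (forall i j, i < j < length l -> ~ equiv_words (nth i l []) (nth j l [])) ->
  length (filter (equivb w) l) <= 1.
Proof. induction l as [|r0 l IH]; intros Hp; simpl; auto.
assert (Hp' : forall i j, i < j < length l -> ~ equiv_words (nth i l []) (nth j l [])).
{ intros i j Hij. apply (Hp (S i) (S j)). simpl. lia. }
destruct (equivb w r0) eqn:E0.
- simpl. assert (filter (equivb w) l = []); [|rewrite H; simpl; auto].
  destruct (filter (equivb w) l) as [|r rest] eqn:Ef; auto. exfalso.
  assert (Hr : In r (filter (equivb w) l)) by (rewrite Ef; simpl; auto). apply filter_In in Hr. destruct Hr as [Hr Er].
  destruct (In_nth l r [] Hr) as [j [Hj Hn]].
  apply (Hp 0 (S j)). simpl. lia. simpl. rewrite Hn.
  apply equivb_spec in E0, Er. apply equiv_words_N in E0, Er. apply equiv_words_N.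
  apply (equivN_trans r0 w r); auto. apply equivN_sym; auto.
- apply IH; auto. Qed.

Definition class_representatives (P : list nat -> Prop) (l : list (list nat)) : Prop :=
  (forall r, In r l -> P r) /\
  (forall w, P w -> exists w', In w' l /\ equiv_words w w') /\
  (forall i j, i < j < length l -> ~ equiv_words (nth i l []) (nth j l [])).

Lemma count_equiv_representatives k h (l : list (list nat)) w : k = 2 * h + 1 ->
  class_representatives (ak_word k) l ->
  V_word k w -> length (filter (equivb w) l) = if top_wordb h w then 1 else 0.
Proof. intros Hk (Hl1&Hl2&Hl3) HV. assert (Hle := count_equiv_le1 l w Hl3).
destruct (top_wordb h w) eqn:EG.
- apply top_wordb_spec in EG. assert (Ha := top_word_ak_word k h w HV Hk EG). destruct (Hl2 w Ha) as [r [Hr He]].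
  assert (In r (filter (equivb w) l)) by (apply filter_In; split; auto; apply equivb_spec; auto).
  destruct (filter (equivb w) l); [contradiction|]. simpl in *. lia.
- destruct (filter (equivb w) l) as [|r rest] eqn:Ef; auto. exfalso.
  assert (Hr : In r (filter (equivb w) l)) by (rewrite Ef; simpl; auto). apply filter_In in Hr. destruct Hr as [Hr Er].
  apply equivb_spec in Er. assert (HVr := ak_word_V_word k r (Hl1 r Hr)). assert (Gr := ak_word_top_word k h r HVr Hk (Hl1 r Hr)).
  destruct HV as (_&Hw1&_). destruct HVr as (_&Hr1&_).
  destruct (equiv_words_invariants h w r Er Hw1 Hr1) as (_&_&HG). apply HG in Gr. apply top_wordb_spec in Gr. congruence. Qed.

Open Scope R_scope.

Definition indicator (b : bool) : R := if b then 1 else 0.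

Lemma Rsum_ind_count {A} (P : A -> bool) l : Rsum (fun x => indicator (P x)) l = INR (length (filter P l)).
Proof. rewrite <- (Rmult_1_l (INR _)), <- (Rsum_const_count P l 1). apply Rsum_ext. intros; unfold indicator; auto. Qed.

Lemma Rsum_words_S N m F : Rsum F (words N (S m)) = Rsum (fun w => Rsum (fun a => F (a :: w)) (seq 1 N)) (words N m).
Proof. rewrite words_S, Rsum_flat_map. apply Rsum_ext. intros; rewrite Rsum_map; auto. Qed.

Lemma Rsum_seq_delta1 N g : (1 <= N)%nat -> Rsum (fun a => indicator (Nat.eqb a 1) * g a) (seq 1 N) = g 1%nat.
Proof. intros HN. destruct N as [|N]; [lia|]. simpl. rewrite Rsum_cons. unfold indicator at 1. simpl.
rewrite (Rsum_ext _ (fun _ => 0)). rewrite Rsum_zero; ring.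
intros a Ha. apply in_seq in Ha. unfold indicator. destruct (Nat.eqb_spec a 1); [lia|]. ring. Qed.

Lemma Vset_in N k w : In w (Vset N k) <-> In w (words N (S k)) /\ hd 0%nat w = 1%nat /\ closedb w = true /\ has_self_edge w = true.
Proof. unfold Vset. rewrite filter_In, Nat.add_1_r, !andb_true_iff, Nat.eqb_eq. tauto. Qed.

Lemma Vset_V_word N k w : In w (Vset N k) -> V_word k w /\ (forall x, In x w -> (1 <= x <= N)%nat).
Proof. intros H. apply Vset_in in H. destruct H as (H1&H2&H3&H4). apply in_words in H1. destruct H1 as [H1 H5].
split; [repeat split; auto; intros y Hy; apply H5; auto | intros y Hy; apply H5; auto]. Qed.

Lemma equiv_closed_self w r : equiv_words w r -> closedb w = closedb r /\ has_self_edge w = has_self_edge r.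
Proof. intros [f [Hi <-]]. rewrite closedb_map, has_self_edge_map; auto. Qed.

Lemma equivb_cons1 (w'' r' : list nat) : length w'' = length r' ->
  equivb (1%nat :: w'') (1%nat :: r') = matchb (combine ([1%nat] ++ w'') ([1%nat] ++ r')).
Proof. intros H. unfold equivb. simpl. rewrite H, Nat.eqb_refl. auto. Qed.

Lemma class_size_eq_count_matching N k X r : (1 <= N)%nat -> hd 0%nat r = 1%nat -> length r = S k -> closedb r = true -> has_self_edge r = true ->
  Rsum (fun w => indicator (equivb w r && avoidb X (tl w))) (Vset N k) = INR (count_matching N X [1%nat] [1%nat] (tl r)).
Proof.
  intros HN Hr1 Hrl Hrc Hrs. destruct r as [|r0 r']; [discriminate|]. simpl in Hr1, Hrl. subst r0. cbn [tl].
  unfold Vset. rewrite Rsum_filter. rewrite Nat.add_1_r, Rsum_words_S.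
  unfold count_matching. rewrite <- Rsum_ind_count.
  assert (Hlr : length r' = k) by lia. rewrite Hlr.
  apply Rsum_ext. intros w'' Hw''. apply in_words in Hw''. destruct Hw'' as [Hw1 Hw2].
  rewrite <- equivb_cons1 by lia.
  rewrite <- (Rsum_seq_delta1 N (fun a => indicator (equivb (a :: w'') (1%nat :: r') && avoidb X w'')) HN).
  apply Rsum_ext. intros a Ha. cbn [tl hd].
  destruct (equivb (a :: w'') (1%nat :: r')) eqn:E.
  - apply equivb_spec in E as E'. destruct (equiv_closed_self _ _ E') as [C1 C2]. rewrite C1, C2, Hrc, Hrs.
    unfold indicator. destruct (Nat.eqb a 1); simpl; destruct (avoidb X w''); ring.
  - unfold indicator. simpl. destruct (_ && _ && _); ring. Qed.

Lemma Rsum_bounds {A} (f : A -> R) l lo hi : (forall x, In x l -> lo <= f x <= hi) ->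
  INR (length l) * lo <= Rsum f l <= INR (length l) * hi.
Proof. induction l as [|x l IH]; intros H; [unfold Rsum; simpl; lra|]. rewrite Rsum_cons. cbn [length]. rewrite S_INR.
destruct (H x (or_introl eq_refl)). destruct (IH (fun y Hy => H y (or_intror Hy))). lra. Qed.

Lemma class_size_bounds N k h X r : (1 <= N)%nat -> k = (2 * h + 1)%nat -> V_word k r -> top_word h r -> ~ In 1%nat X ->
  INR (N - (length X + 1 + k)) ^ h <= Rsum (fun w => indicator (equivb w r && avoidb X (tl w))) (Vset N k) <= INR N ^ h.
Proof. intros HN Hk HV HG HX. destruct HV as (V1&V2&V3&V4&V5).
rewrite class_size_eq_count_matching; auto.
assert (Hb := count_matching_bounds N X [1%nat] [1%nat] (tl r) eq_refl).
assert (HM : matchP (combine [1%nat] [1%nat])) by (intros u v [<-|[]] [<-|[]]; tauto).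
assert (Hp : forall y, In y [1%nat] -> (1 <= y <= N)%nat /\ ~ In y X) by (intros y [<-|[]]; split; [lia|auto]).
destruct (Hb HM Hp) as [B1 B2].
assert (Hn : new_letters [1%nat] (tl r) = h).
{ assert (H := new_letters_wt [1%nat] (tl r)). destruct r as [|r0 r']; [discriminate|]. simpl in V2. subst r0.
  simpl tl in *. destruct HG as (_&_&G3). change ([1%nat] ++ r') with (1%nat :: r') in H. rewrite G3 in H.
  assert (wt [1%nat] = 1%nat) by (rewrite wt_NoDup; auto; repeat constructor; auto). lia. }
rewrite Hn in B1, B2. assert (Hl : length (tl r) = k) by (destruct r; simpl in *; lia). rewrite Hl in B1.
rewrite <- !pow_INR. split; apply le_INR; simpl length in B1; auto. Qed.

Lemma avoidb_nil w : avoidb [] w = true.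
Proof. unfold avoidb. apply forallb_forall. intros; reflexivity. Qed.

Lemma top_sum_by_classes N k h (l : list (list nat)) : k = (2 * h + 1)%nat ->
  class_representatives (ak_word k) l ->
  forall (D : list nat -> bool),
  Rsum (fun w => indicator (top_wordb h w && D w)) (Vset N k) =
  Rsum (fun r => Rsum (fun w => indicator (equivb w r && D w)) (Vset N k)) l.
Proof. intros Hk Hl D. rewrite Rsum_swap. apply Rsum_ext. intros w Hw.
destruct (Vset_V_word N k w Hw) as [HV _].
assert (H := count_equiv_representatives k h l w Hk Hl HV).
destruct (D w) eqn:ED.
- rewrite andb_true_r. rewrite (Rsum_ext _ (fun r => indicator (equivb w r))) by (intros r _; rewrite andb_true_r; auto).
  rewrite Rsum_ind_count, H. destruct (top_wordb h w); simpl; auto.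
- rewrite andb_false_r. rewrite (Rsum_ext _ (fun _ => 0)) by (intros r _; rewrite andb_false_r; auto).
  rewrite Rsum_zero. auto. Qed.

Definition share_only_1 (w w' : list nat) : bool := forallb (fun y => negb (memb y w') || Nat.eqb y 1) w.
Definition non_one_letters (w : list nat) : list nat := filter (fun y => negb (Nat.eqb y 1)) w.

Lemma share_only_1_spec w w' : share_only_1 w w' = true <-> (forall y, In y w -> In y w' -> y = 1%nat).
Proof. unfold share_only_1. rewrite forallb_forall. split.
- intros H y Hy Hy'. specialize (H y Hy). apply memb_spec in Hy'. rewrite Hy' in H. simpl in H. apply Nat.eqb_eq; auto.
- intros H y Hy. destruct (memb y w') eqn:E; simpl; auto. apply memb_spec in E. apply Nat.eqb_eq. auto. Qed.

Lemma share_only_1_avoid w w' : hd 0%nat w' = 1%nat -> w' <> [] -> share_only_1 w w' = avoidb (non_one_letters w) (tl w').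
Proof. intros H1 H2. destruct w' as [|b t]; [contradiction|]. simpl in H1. subst b. simpl tl.
destruct (share_only_1 w (1%nat :: t)) eqn:E; symmetry.
- apply avoidb_spec. intros a Ha Hx. unfold non_one_letters in Hx. apply filter_In in Hx. destruct Hx as [Hx Hn].
  apply share_only_1_spec with (y := a) in E; auto. subst. discriminate. simpl; auto.
- destruct (avoidb (non_one_letters w) t) eqn:E2; auto. exfalso. assert (share_only_1 w (1%nat :: t) = true); [|congruence].
  apply share_only_1_spec. intros y Hy [<-|Hy']; auto. destruct (Nat.eq_dec y 1); auto. exfalso.
  rewrite avoidb_spec in E2. apply (E2 y Hy'). unfold non_one_letters. apply filter_In. split; auto. apply negb_true_iff, Nat.eqb_neq; auto. Qed.

Lemma non_one_letters_props w : ~ In 1%nat (non_one_letters w) /\ (length (non_one_letters w) <= length w)%nat.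
Proof. unfold non_one_letters. split. intros H. apply filter_In in H. destruct H as [_ H]. simpl in H. discriminate.
apply filter_length_le. Qed.

Definition top_pairb (h : nat) (w w' : list nat) : bool := top_wordb h w && top_wordb h w' && share_only_1 w w'.

Lemma top_pairb_spec h w w' : top_pairb h w w' = true <-> top_pair h w w'.
Proof. unfold top_pairb, top_pair. rewrite !andb_true_iff, !top_wordb_spec, share_only_1_spec. tauto. Qed.

Lemma valid_edges_of_word w : (forall x, In x w -> (1 <= x)%nat) -> valid_edges (edge_list w).
Proof. intros H e He. destruct (edge_list_in w e He) as (a&b&->&Ha&Hb). unfold valid_index, edge; simpl.
assert (A1 := H a Ha). assert (A2 := H b Hb). lia. Qed.

Lemma valid_edges_app L1 L2 : valid_edges L1 -> valid_edges L2 -> valid_edges (L1 ++ L2).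
Proof. intros H1 H2 e He. apply in_app_or in He. destruct He; auto. Qed.

Lemma valid_edges_cons11 L : valid_edges L -> valid_edges ((1%nat,1%nat) :: L).
Proof. intros H e [<-|He]; auto. unfold valid_index; simpl; lia. Qed.

Definition cross_sum {Omega} (E : (Omega -> R) -> R) xi N k :=
  Rsum (fun w => moment E xi ((1%nat,1%nat) :: edge_list w)) (Vset N k).
Definition covariance_term {Omega} (E : (Omega -> R) -> R) xi (w w' : list nat) :=
  moment E xi (edge_list w ++ edge_list w') - moment E xi (edge_list w) * moment E xi (edge_list w').
Definition covariance_sum {Omega} (E : (Omega -> R) -> R) xi N k :=
  Rsum (fun w => Rsum (fun w' => covariance_term E xi w w') (Vset N k)) (Vset N k).

Lemma Vset_valid_edges N k w : In w (Vset N k) -> valid_edges (edge_list w).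
Proof. intros H. apply valid_edges_of_word. destruct (Vset_V_word N k w H) as [_ H2]. intros x Hx; apply H2; auto. Qed.

Lemma E_xi11_Z {Omega} (E : (Omega -> R) -> R) xi N k : model_hyps E xi ->
  E (fun om => xi 1%nat 1%nat om * ZNk E xi N k om) = (/ sqrt (INR N)) ^ (k - 1) * cross_sum E xi N k.
Proof.
  intros HM. assert (HL := model_linear_E E xi HM). assert (HM' := HM). destruct HM' as (_&_&_&_&_&_&H0&_).
  set (c := (/ sqrt (INR N)) ^ (k - 1)).
  rewrite (E_ext E _ (fun om => c * Rsum (fun w => monomial xi ((1%nat,1%nat) :: edge_list w) om + (- E (Tw xi w)) * xi 1%nat 1%nat om) (Vset N k))).
  2:{ intros om. unfold ZNk. fold c.
      transitivity (c * (xi 1%nat 1%nat om * Rsum (fun x => (Tw xi x om - E (Tw xi x))) (Vset N k))); [ring|].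
      rewrite <- Rsum_scal. f_equal. apply Rsum_ext. intros w _. rewrite Tw_monomial. unfold monomial. rewrite Rprod_cons. unfold xi_e. simpl. ring. }
  rewrite E_scal, (E_sum E (fun w om => monomial xi ((1%nat,1%nat) :: edge_list w) om + - E (Tw xi w) * xi 1%nat 1%nat om)) by auto.
  unfold cross_sum. f_equal. apply Rsum_ext. intros w Hw. rewrite E_add, E_scal by auto. rewrite H0.
  rewrite E_monomial; auto. ring. apply valid_edges_cons11. apply (Vset_valid_edges N k); auto.
Qed.

Lemma E_Tw {Omega} (E : (Omega -> R) -> R) xi N k w : model_hyps E xi -> In w (Vset N k) ->
  E (Tw xi w) = moment E xi (edge_list w).
Proof. intros HM Hw. rewrite (E_ext E _ (monomial xi (edge_list w))) by (intros; apply Tw_monomial). apply E_monomial; auto.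
apply (Vset_valid_edges N k); auto. Qed.

Lemma E_Z_sub_sq {Omega} (E : (Omega -> R) -> R) xi N k (a : R) : model_hyps E xi ->
  E (fun om => (ZNk E xi N k om - a * xi 1%nat 1%nat om) ^ 2) =
  ((/ sqrt (INR N)) ^ (k - 1)) ^ 2 * covariance_sum E xi N k - 2 * a * ((/ sqrt (INR N)) ^ (k - 1) * cross_sum E xi N k)
  + a ^ 2 * diag_moment E xi 2.
Proof.
  intros HM. assert (HL := model_linear_E E xi HM).
  set (c := (/ sqrt (INR N)) ^ (k - 1)).
  set (G := fun w w' om => monomial xi (edge_list w ++ edge_list w') om + (- E (Tw xi w')) * monomial xi (edge_list w) om
                    + (- E (Tw xi w)) * monomial xi (edge_list w') om + E (Tw xi w) * E (Tw xi w')).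
  set (F := fun w om => monomial xi ((1%nat,1%nat) :: edge_list w) om + (- E (Tw xi w)) * xi 1%nat 1%nat om).
  rewrite (E_ext E _ (fun om => (c ^ 2 * Rsum (fun w => Rsum (fun w' => G w w' om) (Vset N k)) (Vset N k) + (-2 * a * c) * Rsum (fun w => F w om) (Vset N k))
                              + a ^ 2 * (xi 1%nat 1%nat om ^ 2))).
  2:{ intros om. unfold ZNk. fold c.
      pose (Y := fun w => Tw xi w om - E (Tw xi w)).
      change (Rsum (fun w => Tw xi w om - E (Tw xi w)) (Vset N k)) with (Rsum Y (Vset N k)).
      assert (HG : Rsum (fun w => Rsum (fun w' => G w w' om) (Vset N k)) (Vset N k) = Rsum Y (Vset N k) * Rsum Y (Vset N k)).
      { rewrite Rsum_mult. apply Rsum_ext. intros w _. apply Rsum_ext. intros w' _. unfold G, Y.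
        rewrite !Tw_monomial, monomial_app. ring. }
      assert (HF : Rsum (fun w => F w om) (Vset N k) = xi 1%nat 1%nat om * Rsum Y (Vset N k)).
      { rewrite <- Rsum_scal. apply Rsum_ext. intros w _. unfold F, Y. rewrite Tw_monomial. unfold monomial. rewrite Rprod_cons.
        unfold xi_e. simpl. ring. }
      rewrite HG, HF. ring. }
  rewrite E_add, E_add, E_scal, E_scal, E_scal by auto.
  rewrite (E_sum E (fun w om => Rsum (fun w' => G w w' om) (Vset N k))) by auto.
  rewrite (E_sum E F) by auto.
  assert (HS1 : Rsum (fun w => E (F w)) (Vset N k) = cross_sum E xi N k).
  { unfold cross_sum. apply Rsum_ext. intros w Hw. unfold F. rewrite E_add, E_scal by auto.
    assert (HM2 := HM). destruct HM2 as (_&_&_&_&_&_&H0&_). rewrite H0. rewrite E_monomial; auto. ring.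
    apply valid_edges_cons11. apply (Vset_valid_edges N k); auto. }
  assert (HS2 : Rsum (fun w => E (fun om => Rsum (fun w' => G w w' om) (Vset N k))) (Vset N k) = covariance_sum E xi N k).
  { unfold covariance_sum, covariance_term. apply Rsum_ext. intros w Hw. rewrite (E_sum E (G w)) by auto. apply Rsum_ext. intros w' Hw'.
    unfold G. rewrite !E_add, !E_scal, E_const by auto.
    rewrite !E_monomial; auto; try (apply (Vset_valid_edges N k); auto). rewrite !(E_Tw E xi N k); auto. ring.
    apply valid_edges_app; apply (Vset_valid_edges N k); auto. }
  rewrite HS1, HS2. unfold diag_moment. ring.
Qed.

Definition mconst {Omega} (E : (Omega -> R) -> R) xi k : R :=
  1 + Rsum (fun n => Rabs (diag_moment E xi n) + Rabs (offdiag_moment E xi n)) (seq 0 (2 * k + 2)).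

Lemma Rsum_nonneg {A} (f : A -> R) l : (forall x, In x l -> 0 <= f x) -> 0 <= Rsum f l.
Proof. induction l; intros H; [unfold Rsum; simpl; lra|]. rewrite Rsum_cons.
assert (0 <= f a) by (apply H; simpl; auto). assert (0 <= Rsum f l) by (apply IHl; intros; apply H; simpl; auto). lra. Qed.

Lemma Rsum_ge_term {A} (f : A -> R) l x : (forall y, In y l -> 0 <= f y) -> In x l -> f x <= Rsum f l.
Proof. induction l as [|y l IH]; intros H Hx; [contradiction|]. rewrite Rsum_cons.
destruct Hx as [->|Hx].
- assert (0 <= Rsum f l) by (apply Rsum_nonneg; intros; apply H; simpl; auto). lra.
- assert (0 <= f y) by (apply H; simpl; auto). assert (f x <= Rsum f l) by (apply IH; auto; intros; apply H; simpl; auto). lra. Qed.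

Lemma mconst_ge1 {Omega} (E : (Omega -> R) -> R) xi k : 1 <= mconst E xi k.
Proof. unfold mconst. assert (0 <= Rsum (fun n => Rabs (diag_moment E xi n) + Rabs (offdiag_moment E xi n)) (seq 0 (2 * k + 2))).
apply Rsum_nonneg. intros; assert (0 <= Rabs (diag_moment E xi x)) by apply Rabs_pos; assert (0 <= Rabs (offdiag_moment E xi x)) by apply Rabs_pos; lra. lra. Qed.

Lemma mconst_bound {Omega} (E : (Omega -> R) -> R) xi k n : (n <= 2 * k + 1)%nat ->
  Rabs (diag_moment E xi n) <= mconst E xi k /\ Rabs (offdiag_moment E xi n) <= mconst E xi k.
Proof. intros Hn. unfold mconst.
assert (H := Rsum_ge_term (fun n => Rabs (diag_moment E xi n) + Rabs (offdiag_moment E xi n)) (seq 0 (2 * k + 2)) n).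
assert (Hin : In n (seq 0 (2 * k + 2))) by (apply in_seq; lia).
assert (Hp : forall y, In y (seq 0 (2 * k + 2)) -> 0 <= Rabs (diag_moment E xi y) + Rabs (offdiag_moment E xi y))
  by (intros; assert (0 <= Rabs (diag_moment E xi y)) by apply Rabs_pos; assert (0 <= Rabs (offdiag_moment E xi y)) by apply Rabs_pos; lra).
specialize (H Hp Hin). cbv beta in H. assert (0 <= Rabs (diag_moment E xi n)) by apply Rabs_pos. assert (0 <= Rabs (offdiag_moment E xi n)) by apply Rabs_pos.
split; lra. Qed.

Lemma moment_le_mconst {Omega} (E : (Omega -> R) -> R) xi k L : (length L <= 2 * k + 1)%nat ->
  Rabs (moment E xi L) <= mconst E xi k ^ length L.
Proof. intros H. apply moment_bound. apply mconst_ge1. intros n Hn. apply mconst_bound. lia. Qed.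

Lemma indicator_bounds b : 0 <= indicator b <= 1. Proof. unfold indicator; destruct b; lra. Qed.

Lemma Rsum_indicator_split {A} (f : A -> R) (g : A -> bool) c l :
  (forall x, In x l -> g x = true -> f x = c) ->
  Rsum f l = c * Rsum (fun x => indicator (g x)) l + Rsum (fun x => indicator (negb (g x)) * f x) l.
Proof.
  intros H. rewrite <- Rsum_scal, <- Rsum_plus. apply Rsum_ext. intros x Hx.
  unfold indicator. destruct (g x) eqn:Eg; simpl; [rewrite (H x Hx Eg)|]; ring.
Qed.

Lemma Rsum_indicator_rest_bound {A} (f : A -> R) (g low : A -> bool) K l : 0 <= K ->
  (forall x, In x l -> g x = false -> f x <> 0 -> low x = true /\ Rabs (f x) <= K) ->
  Rabs (Rsum (fun x => indicator (negb (g x)) * f x) l) <= K * Rsum (fun x => indicator (low x)) l.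
Proof.
  intros HK H. eapply Rle_trans; [apply Rsum_abs|]. rewrite <- Rsum_scal. apply Rsum_le. intros x Hx.
  assert (0 <= K * indicator (low x)) by (apply Rmult_le_pos; [auto|apply indicator_bounds]).
  unfold indicator at 1. destruct (g x) eqn:Eg; simpl negb.
  - rewrite Rmult_0_l, Rabs_R0; auto.
  - rewrite Rmult_1_l. destruct (Req_dec (f x) 0) as [Z|NZ]; [rewrite Z, Rabs_R0; auto|].
    destruct (H x Hx Eg NZ) as [Hl Hb]. rewrite Hl. unfold indicator. rewrite Rmult_1_r. auto.
Qed.

Section Decomposition.

Variables (Omega : Type) (E : (Omega -> R) -> R) (xi : nat -> nat -> Omega -> R) (k h : nat).
Hypothesis HM : model_hyps E xi.
Hypothesis Hk : k = (2 * h + 1)%nat.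

Lemma cross_term_top w : V_word k w -> top_word h w ->
  moment E xi ((1%nat,1%nat) :: edge_list w) = diag_moment E xi 2.
Proof.
  intros HV EG. apply moment_pairing; auto.
  - left; auto.
  - intros e [<-|He].
    + rewrite ecount_cons, edge_eqb_refl. destruct EG as [G1 _]. lia.
    + rewrite ecount_cons. destruct (pair_eq_dec e (1%nat,1%nat)) as [->|Hne].
      * rewrite edge_eqb_refl. destruct EG as [G1 _]. lia.
      * rewrite edge_eqb_false by auto. rewrite (top_word_ecount_two k h w HV Hk EG e He Hne). auto.
  - intros e [<-|He] Hne; [contradiction|]. destruct EG as (_&G2&_). destruct (G2 e He Hne) as [L _].
    unfold is_loop in L. apply Nat.eqb_neq; auto.
Qed.

Lemma cross_term_rest w : V_word k w -> top_wordb h w = false ->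
  moment E xi ((1%nat,1%nat) :: edge_list w) <> 0 ->
  Nat.leb (wt w) h = true /\ Rabs (moment E xi ((1%nat,1%nat) :: edge_list w)) <= mconst E xi k ^ S k.
Proof.
  intros HV EG NZ. split.
  - destruct (wt_le_of_paired k h w HV Hk (moment_neq0_paired E xi _ HM NZ)) as [W1 W2].
    apply Nat.leb_le. destruct (Nat.eq_dec (wt w) (S h)) as [Eq|]; [|lia].
    apply W2, top_wordb_spec in Eq. congruence.
  - replace (S k) with (length ((1%nat,1%nat) :: edge_list w))
      by (simpl; destruct (V_word_props k w HV) as (_&_&X&_); lia).
    apply moment_le_mconst. simpl. destruct (V_word_props k w HV) as (_&_&X&_). lia.
Qed.

Lemma cross_sum_decomp N :
  exists R1, cross_sum E xi N k = diag_moment E xi 2 * Rsum (fun w => indicator (top_wordb h w)) (Vset N k) + R1 /\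
    Rabs R1 <= mconst E xi k ^ (S k) * Rsum (fun w => indicator (Nat.leb (wt w) h)) (Vset N k).
Proof.
  eexists. split.
  - apply Rsum_indicator_split. intros w Hw EG.
    apply cross_term_top; [apply (Vset_V_word N k w Hw) | apply top_wordb_spec; auto].
  - apply Rsum_indicator_rest_bound; [apply pow_le; generalize (mconst_ge1 E xi k); lra|].
    intros w Hw EG NZ. apply cross_term_rest; auto. apply (Vset_V_word N k w Hw).
Qed.

Lemma covariance_term_top w w' : V_word k w -> V_word k w' -> top_pair h w w' ->
  covariance_term E xi w w' = diag_moment E xi 2.
Proof.
  intros HV HV' EP. destruct (top_pair_ecounts k h w w' HV HV' Hk EP) as (P1&P2&P3).
  unfold covariance_term. rewrite (moment_pairing E xi); auto.
  assert (moment E xi (edge_list w) = 0).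
  { destruct EP as [[G1 _] _]. apply (moment_single_edge E xi _ (1%nat,1%nat)); auto.
    destruct (in_dec pair_eq_dec (1%nat,1%nat) (edge_list w)); auto. rewrite ecount_notin in G1; auto. discriminate. }
  rewrite H. ring.
Qed.

Lemma covariance_term_rest w w' : V_word k w -> V_word k w' -> top_pairb h w w' = false ->
  covariance_term E xi w w' <> 0 ->
  Nat.leb (wt (w ++ w')) (2 * h) = true /\ Rabs (covariance_term E xi w w') <= 2 * mconst E xi k ^ (2 * k).
Proof.
  intros HV HV' EP NZ. split.
  - apply Nat.leb_le. unfold covariance_term in NZ.
    destruct (Req_dec (moment E xi (edge_list w ++ edge_list w')) 0) as [Z1|NZ1].
    + assert (NZ2 : moment E xi (edge_list w) * moment E xi (edge_list w') <> 0)
        by (intros C; apply NZ; rewrite Z1, C; ring).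
      apply (wt_app_le_of_self_paired k h w w' HV HV' Hk);
        apply (moment_neq0_paired E xi); auto; intros C; apply NZ2; rewrite C; ring.
    + apply (wt_app_le_of_paired k h w w' HV HV' Hk).
      * intros HA. apply top_pairb_spec in HA. congruence.
      * apply (moment_neq0_paired E xi); auto.
  - assert (Hlw : length (edge_list w) = k) by (destruct (V_word_props k w HV) as (_&_&X&_); auto).
    assert (Hlw' : length (edge_list w') = k) by (destruct (V_word_props k w' HV') as (_&_&X&_); auto).
    unfold covariance_term. eapply Rle_trans; [apply Rabs_triang|]. rewrite Rabs_Ropp, Rabs_mult.
    assert (B1 : Rabs (moment E xi (edge_list w ++ edge_list w')) <= mconst E xi k ^ (2 * k)).
    { replace (2 * k)%nat with (length (edge_list w ++ edge_list w')) by (rewrite length_app; lia).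
      apply moment_le_mconst. rewrite length_app; lia. }
    assert (B2 : Rabs (moment E xi (edge_list w)) <= mconst E xi k ^ k) by (rewrite <- Hlw at 2; apply moment_le_mconst; lia).
    assert (B3 : Rabs (moment E xi (edge_list w')) <= mconst E xi k ^ k) by (rewrite <- Hlw' at 2; apply moment_le_mconst; lia).
    assert (B4 : Rabs (moment E xi (edge_list w)) * Rabs (moment E xi (edge_list w')) <= mconst E xi k ^ k * mconst E xi k ^ k)
      by (apply Rmult_le_compat; auto; apply Rabs_pos).
    rewrite <- pow_add in B4. replace (k + k)%nat with (2 * k)%nat in B4 by lia. lra.
Qed.

Lemma covariance_sum_decomp N :
  exists R2, covariance_sum E xi N k = diag_moment E xi 2 * Rsum (fun w => Rsum (fun w' => indicator (top_pairb h w w')) (Vset N k)) (Vset N k) + R2 /\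
    Rabs R2 <= 2 * mconst E xi k ^ (2 * k) * Rsum (fun w => Rsum (fun w' => indicator (Nat.leb (wt (w ++ w')) (2 * h))) (Vset N k)) (Vset N k).
Proof.
  assert (HK : 0 <= 2 * mconst E xi k ^ (2 * k))
    by (assert (0 <= mconst E xi k ^ (2 * k)) by (apply pow_le; generalize (mconst_ge1 E xi k); lra); lra).
  exists (Rsum (fun w => Rsum (fun w' => indicator (negb (top_pairb h w w')) * covariance_term E xi w w') (Vset N k)) (Vset N k)).
  split.
  - unfold covariance_sum. rewrite <- Rsum_scal, <- Rsum_plus. apply Rsum_ext. intros w Hw.
    apply Rsum_indicator_split. intros w' Hw' EP.
    apply covariance_term_top; [apply (Vset_V_word N k w Hw)|apply (Vset_V_word N k w' Hw')|apply top_pairb_spec; auto].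
  - eapply Rle_trans; [apply Rsum_abs|]. rewrite <- Rsum_scal. apply Rsum_le. intros w Hw.
    apply Rsum_indicator_rest_bound; auto. intros w' Hw' EP NZ.
    apply covariance_term_rest; auto; [apply (Vset_V_word N k w Hw)|apply (Vset_V_word N k w' Hw')].
Qed.

End Decomposition.

Definition top_count N k h := Rsum (fun w => indicator (top_wordb h w)) (Vset N k).
Definition top_pair_count N k h := Rsum (fun w => Rsum (fun w' => indicator (top_pairb h w w')) (Vset N k)) (Vset N k).

Lemma top_count_bounds N k h (l : list (list nat)) : (1 <= N)%nat -> k = (2 * h + 1)%nat ->
  class_representatives (ak_word k) l ->
  INR (length l) * INR (N - (0 + 1 + k)) ^ h <= top_count N k h <= INR (length l) * INR N ^ h.
Proof. intros HN Hk Hl. assert (Hl1 := proj1 Hl). unfold top_count.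
rewrite (Rsum_ext _ (fun w => indicator (top_wordb h w && (fun w => avoidb [] (tl w)) w))) by (intros; rewrite avoidb_nil, andb_true_r; auto).
rewrite (top_sum_by_classes N k h l Hk Hl). apply Rsum_bounds. intros r Hr.
assert (HV := ak_word_V_word k r (Hl1 r Hr)). assert (HG := ak_word_top_word k h r HV Hk (Hl1 r Hr)).
apply (class_size_bounds N k h [] r); auto. Qed.

Lemma Rsum_ind_mult_bounds {A} (g : A -> bool) (Q : A -> R) l lo hi :
  (forall x, In x l -> g x = true -> lo <= Q x <= hi) ->
  lo * Rsum (fun x => indicator (g x)) l <= Rsum (fun x => indicator (g x) * Q x) l <= hi * Rsum (fun x => indicator (g x)) l.
Proof. induction l as [|x l IH]; intros H; [unfold Rsum; simpl; lra|]. rewrite !Rsum_cons.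
destruct (IH (fun y Hy => H y (or_intror Hy))). destruct (g x) eqn:E.
- change (indicator true) with 1. destruct (H x (or_introl eq_refl) E). lra.
- change (indicator false) with 0. lra. Qed.

Lemma top_pair_count_bounds N k h (l : list (list nat)) : (1 <= N)%nat -> k = (2 * h + 1)%nat ->
  class_representatives (ak_word k) l ->
  INR (length l) * INR (N - (2 * k + 2)) ^ h * top_count N k h <= top_pair_count N k h <= INR (length l) * INR N ^ h * top_count N k h.
Proof. intros HN Hk Hl. assert (Hl1 := proj1 Hl). unfold top_pair_count, top_count.
assert (EP : Rsum (fun w => Rsum (fun w' => indicator (top_pairb h w w')) (Vset N k)) (Vset N k) =
  Rsum (fun w => indicator (top_wordb h w) * Rsum (fun w' => indicator (top_wordb h w' && share_only_1 w w')) (Vset N k)) (Vset N k)).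
{ apply Rsum_ext. intros w Hw. rewrite <- Rsum_scal. apply Rsum_ext. intros w' Hw'. unfold top_pairb, indicator.
    destruct (top_wordb h w), (top_wordb h w'), (share_only_1 w w'); simpl; ring. }
rewrite EP.
apply Rsum_ind_mult_bounds. intros w Hw EG.
rewrite (top_sum_by_classes N k h l Hk Hl (share_only_1 w)).
rewrite (Rsum_ext _ (fun r => Rsum (fun w' => indicator (equivb w' r && avoidb (non_one_letters w) (tl w'))) (Vset N k))).
2:{ intros r Hr. apply Rsum_ext. intros w' Hw'. apply Vset_in in Hw'. destruct Hw' as (W1&W2&W3&_).
    rewrite share_only_1_avoid; auto. apply in_words in W1. destruct W1 as [W1 _]. destruct w'; [discriminate|]. discriminate. }
apply Rsum_bounds. intros r Hr.
assert (HV := ak_word_V_word k r (Hl1 r Hr)). assert (HG := ak_word_top_word k h r HV Hk (Hl1 r Hr)).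
destruct (non_one_letters_props w) as [X1 X2].
destruct (class_size_bounds N k h (non_one_letters w) r HN Hk HV HG X1) as [B1 B2]. split; auto.
eapply Rle_trans; [|apply B1]. apply pow_incr. split; [apply pos_INR|]. apply le_INR.
destruct (Vset_V_word N k w Hw) as [[Hlw _] _]. lia. Qed.

Lemma Rsum_filter_le {A} (f : A -> R) (P : A -> bool) l : (forall x, 0 <= f x) -> Rsum f (filter P l) <= Rsum f l.
Proof. intros H. induction l; simpl; [lra|]. destruct (P a); rewrite ?Rsum_cons; specialize (H a); lra. Qed.

Lemma Rsum_Vset_le_words N k (f : list nat -> R) : (forall x, 0 <= f x) ->
  Rsum f (Vset N k) <= Rsum (fun w => indicator (Nat.eqb (hd 0%nat w) 1) * f w) (words N (S k)).
Proof. intros H. unfold Vset. rewrite Rsum_filter, Nat.add_1_r. apply Rsum_le. intros w _.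
unfold indicator. destruct (Nat.eqb (hd 0%nat w) 1); simpl; specialize (H w); [destruct (closedb w && has_self_edge w)|]; lra. Qed.

Lemma Rsum_words_app N m1 m2 (F : list nat -> R) :
  Rsum (fun w => Rsum (fun w' => F (w ++ w')) (words N m2)) (words N m1) = Rsum F (words N (m1 + m2)).
Proof. revert F. induction m1 as [|m1 IH]; intros F.
- simpl. rewrite Rsum_cons, Rsum_nil. simpl. rewrite Rplus_0_r. reflexivity.
- rewrite Rsum_words_S. simpl (S m1 + m2)%nat. rewrite Rsum_words_S.
  rewrite (Rsum_ext _ (fun w => Rsum (fun a => Rsum (fun w' => F (a :: (w ++ w'))) (words N m2)) (seq 1 N))) by auto.
  rewrite Rsum_swap. rewrite (Rsum_swap (fun u a => F (a :: u))). apply Rsum_ext. intros a _.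
  apply (IH (fun u => F (a :: u))). Qed.

Lemma low_weight_count N k h : (1 <= N)%nat ->
  INR N * Rsum (fun w => indicator (Nat.leb (wt w) h)) (Vset N k) <= INR (S h ^ k) * INR N ^ h.
Proof. intros HN. eapply Rle_trans.
- apply Rmult_le_compat_l. apply pos_INR. apply Rsum_Vset_le_words. intros; apply indicator_bounds.
- rewrite Rsum_words_S. rewrite (Rsum_ext _ (fun w'' => indicator (Nat.leb (wt (1%nat :: w'')) h))).
  2:{ intros w'' _. rewrite <- (Rsum_seq_delta1 N (fun a => indicator (Nat.leb (wt (a :: w'')) h)) HN). apply Rsum_ext. intros; simpl; auto. }
  rewrite Rsum_ind_count. rewrite <- mult_INR, <- pow_INR, <- mult_INR. apply le_INR.
  assert (H := count_low_weight_words N k h [1%nat] HN). assert (wt [1%nat] = 1%nat) by (rewrite wt_NoDup; auto; repeat constructor; auto).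
  rewrite H0, Nat.pow_1_r in H. apply H. Qed.

Lemma low_weight_pair_count N k h : (1 <= N)%nat ->
  INR N * Rsum (fun w => Rsum (fun w' => indicator (Nat.leb (wt (w ++ w')) (2 * h))) (Vset N k)) (Vset N k)
  <= INR (S (2 * h) ^ (k + S k)) * INR N ^ (2 * h).
Proof. intros HN. eapply Rle_trans.
- apply Rmult_le_compat_l. apply pos_INR.
  eapply Rle_trans.
  + apply Rsum_le. intros w _. apply (Rsum_filter_le (fun w' => indicator (Nat.leb (wt (w ++ w')) (2 * h)))). intros; apply indicator_bounds.
  + apply Rsum_Vset_le_words. intros. apply Rsum_nonneg. intros; apply indicator_bounds.
- replace (k + 1)%nat with (S k) by lia.
  rewrite (Rsum_ext _ (fun w => Rsum (fun w' => (fun u => indicator (Nat.eqb (hd 0%nat u) 1) * indicator (Nat.leb (wt u) (2 * h))) (w ++ w')) (words N (S k)))).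
  2:{ intros w Hw. rewrite <- Rsum_scal. apply Rsum_ext. intros w' _. apply in_words in Hw. destruct Hw as [Hw _].
      destruct w; [discriminate|]. simpl. auto. }
  rewrite (Rsum_words_app N (S k) (S k) (fun u => indicator (Nat.eqb (hd 0%nat u) 1) * indicator (Nat.leb (wt u) (2 * h)))).
  simpl (S k + S k)%nat. rewrite Rsum_words_S.
  rewrite (Rsum_ext _ (fun u'' => indicator (Nat.leb (wt (1%nat :: u'')) (2 * h)))).
  2:{ intros u'' _. rewrite <- (Rsum_seq_delta1 N (fun a => indicator (Nat.leb (wt (a :: u'')) (2 * h))) HN). apply Rsum_ext. intros; simpl; auto. }
  rewrite Rsum_ind_count. rewrite <- mult_INR, <- pow_INR, <- mult_INR. apply le_INR.
  assert (H := count_low_weight_words N (k + S k) (2 * h) [1%nat] HN). assert (wt [1%nat] = 1%nat) by (rewrite wt_NoDup; auto; repeat constructor; auto).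
  rewrite H0, Nat.pow_1_r in H. apply H. Qed.

(** * Asymptotics *)

Lemma cv_ext_loc (u v : nat -> R) l : (exists N0, forall n, (N0 <= n)%nat -> u n = v n) -> Un_cv u l -> Un_cv v l.
Proof. intros [N0 H] Hu eps He. destruct (Hu eps He) as [N1 H1]. exists (Nat.max N0 N1). intros n Hn.
rewrite <- H by lia. apply H1. lia. Qed.

Lemma cv_squeeze (u v w : nat -> R) l : (exists N0, forall n, (N0 <= n)%nat -> u n <= v n <= w n) ->
  Un_cv u l -> Un_cv w l -> Un_cv v l.
Proof. intros [N0 H] Hu Hw eps He. destruct (Hu eps He) as [N1 H1]. destruct (Hw eps He) as [N2 H2].
exists (Nat.max N0 (Nat.max N1 N2)). intros n Hn. specialize (H n ltac:(lia)). specialize (H1 n ltac:(lia)).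
specialize (H2 n ltac:(lia)). unfold Rdist in *. apply Rabs_def2 in H1. apply Rabs_def2 in H2. apply Rabs_def1; lra. Qed.

Lemma cv_const c : Un_cv (fun _ => c) c.
Proof. intros eps He. exists 0%nat. intros. unfold Rdist. rewrite Rminus_diag, Rabs_R0. auto. Qed.

Lemma cv_invN : Un_cv (fun n => / INR n) 0.
Proof. apply cv_infty_cv_0. intros M. destruct (INR_unbounded (Rmax M 0)) as [n Hn]. exists n. intros m Hm.
apply le_INR in Hm. assert (M <= Rmax M 0) by apply Rmax_l. lra. Qed.

Lemma cv_pow (u : nat -> R) l m : Un_cv u l -> Un_cv (fun n => u n ^ m) (l ^ m).
Proof. intros H. induction m as [|m IH]; simpl. apply cv_const. apply (CV_mult u (fun n => u n ^ m)); auto. Qed.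

Lemma cv_scal (u : nat -> R) l c : Un_cv u l -> Un_cv (fun n => c * u n) (c * l).
Proof. intros H. apply (CV_mult (fun _ => c) u); auto. apply cv_const. Qed.

Lemma cv_one_minus (B : R) : Un_cv (fun n => 1 - B * / INR n) 1.
Proof. assert (H := CV_minus (fun _ => 1) (fun n => B * / INR n) 1 (B * 0) (cv_const 1) (cv_scal _ _ B cv_invN)).
replace (1 - B * 0) with 1 in H by ring. exact H. Qed.

Lemma cv_abs_zero (u w : nat -> R) : (exists N0, forall n, (N0 <= n)%nat -> Rabs (u n) <= w n) -> Un_cv w 0 -> Un_cv u 0.
Proof. intros [N0 H] Hw. apply (cv_squeeze (fun n => - w n) u w).
- exists N0. intros n Hn. specialize (H n Hn). assert (A1 := Rle_abs (u n)). assert (A2 := Rle_abs (- u n)). rewrite Rabs_Ropp in A2. split; lra.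
- replace 0 with (- 0) by ring. apply (CV_opp w 0) in Hw. unfold opp_seq in Hw. auto.
- auto. Qed.

Lemma pow_div_INR (x y : R) h : y <> 0 -> (x / y) ^ h = x ^ h / y ^ h.
Proof. intros Hy. unfold Rdiv. rewrite Rpow_mult_distr, pow_inv. auto. Qed.

Lemma cv_ratio_of_bounds (B h : nat) (c : R) (f : nat -> R) :
  (forall N, (B < N)%nat -> c * (INR N - INR B) ^ h <= f N <= c * INR N ^ h) ->
  Un_cv (fun N => f N / INR N ^ h) c.
Proof. intros H.
apply (cv_squeeze (fun N => c * (1 - INR B * / INR N) ^ h) _ (fun _ => c)).
- exists (S B). intros n Hn. assert (Hn0 : 0 < INR n) by (apply lt_0_INR; lia).
  assert (Hp : 0 < INR n ^ h) by (apply pow_lt; auto).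
  destruct (H n ltac:(lia)) as [H1 H2]. split.
  + replace (1 - INR B * / INR n) with ((INR n - INR B) / INR n) by (field; lra).
    rewrite pow_div_INR by lra. unfold Rdiv. rewrite <- Rmult_assoc. apply Rmult_le_compat_r.
    left; apply Rinv_0_lt_compat; auto. auto.
  + unfold Rdiv. apply (Rmult_le_reg_r (INR n ^ h)); auto. rewrite Rmult_assoc, Rinv_l by lra. lra.
- assert (Hc := cv_scal _ _ c (cv_pow _ _ h (cv_one_minus (INR B)))). rewrite pow1, Rmult_1_r in Hc. exact Hc.
- apply cv_const. Qed.

Lemma scaling_eq N k h : (1 <= N)%nat -> k = (2 * h + 1)%nat -> (/ sqrt (INR N)) ^ (k - 1) = / (INR N ^ h).
Proof. intros HN Hk. replace (k - 1)%nat with (2 * h)%nat by lia. rewrite pow_mult.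
assert (HNp : 0 < INR N) by (apply lt_0_INR; lia).
assert ((/ sqrt (INR N)) ^ 2 = / INR N). { rewrite pow_inv. rewrite pow2_sqrt; lra. }
rewrite H. rewrite pow_inv. auto. Qed.

Lemma remainder_vanishes (r c : nat -> R) (K C : R) (p : nat) : 0 <= K ->
  (forall N, (1 <= N)%nat -> Rabs (r N) <= K * c N) ->
  (forall N, (1 <= N)%nat -> INR N * c N <= C * INR N ^ p) ->
  Un_cv (fun N => r N / INR N ^ p) 0.
Proof.
  intros HK Hr Hc. apply (cv_abs_zero _ (fun N => K * C * / INR N)).
  - exists 1%nat. intros N HN. assert (HNp : 0 < INR N) by (apply lt_0_INR; lia).
    assert (Hp : 0 < INR N ^ p) by (apply pow_lt; auto).
    assert (Hbound : Rabs (r N) * INR N <= K * C * INR N ^ p).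
    { apply (Rle_trans _ (K * c N * INR N)).
      - apply Rmult_le_compat_r; [lra | auto].
      - rewrite Rmult_assoc, Rmult_assoc. apply Rmult_le_compat_l; auto.
        rewrite Rmult_comm. auto. }
    unfold Rdiv. rewrite Rabs_mult, (Rabs_right (/ INR N ^ p)) by (left; apply Rinv_0_lt_compat; auto).
    apply (Rmult_le_reg_r (INR N * INR N ^ p)); [apply Rmult_lt_0_compat; auto|].
    replace (Rabs (r N) * / INR N ^ p * (INR N * INR N ^ p)) with (Rabs (r N) * INR N) by (field; lra).
    replace (K * C * / INR N * (INR N * INR N ^ p)) with (K * C * INR N ^ p) by (field; lra). auto.
  - replace 0 with (K * C * 0) by ring. apply cv_scal, cv_invN.
Qed.

Section Limits.

Variables (Omega : Type) (E : (Omega -> R) -> R) (xi : nat -> nat -> Omega -> R).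
Variables (k h : nat) (l : list (list nat)).
Hypothesis HM : model_hyps E xi.
Hypothesis Hk : k = (2 * h + 1)%nat.
Hypothesis Hl : class_representatives (ak_word k) l.

Lemma top_count_limit : Un_cv (fun N => top_count N k h / INR N ^ h) (INR (length l)).
Proof.
  apply (cv_ratio_of_bounds (0 + 1 + k) h). intros N HN.
  destruct (top_count_bounds N k h l ltac:(lia) Hk Hl) as [B1 B2].
  rewrite minus_INR in B1 by lia. auto.
Qed.

Lemma top_pair_count_limit :
  Un_cv (fun N => top_pair_count N k h / INR N ^ (2 * h)) (INR (length l) * INR (length l)).
Proof.
  set (x := fun N => top_count N k h / INR N ^ h).
  apply (cv_squeeze (fun N => (INR (length l) * (1 - INR (2 * k + 2) * / INR N) ^ h) * x N) _ (fun N => INR (length l) * x N)).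
  - exists (S (2 * k + 2)). intros N HN. assert (HNp : 0 < INR N) by (apply lt_0_INR; lia).
    assert (Hp : 0 < INR N ^ h) by (apply pow_lt; auto).
    destruct (top_pair_count_bounds N k h l ltac:(lia) Hk Hl) as [B1 B2].
    rewrite minus_INR in B1 by lia.
    unfold x. replace (INR N ^ (2 * h)) with (INR N ^ h * INR N ^ h) by (rewrite <- pow_add; f_equal; lia).
    split.
    + replace (1 - INR (2 * k + 2) * / INR N) with ((INR N - INR (2 * k + 2)) / INR N) by (field; lra).
      rewrite pow_div_INR by lra.
      apply (Rmult_le_reg_r (INR N ^ h * INR N ^ h)); [apply Rmult_lt_0_compat; auto|].
      unfold Rdiv. field_simplify; try lra.
    + apply (Rmult_le_reg_r (INR N ^ h * INR N ^ h)); [apply Rmult_lt_0_compat; auto|].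
      unfold Rdiv. field_simplify; try lra.
  - assert (H := CV_mult _ _ _ _ (cv_scal _ _ (INR (length l)) (cv_pow _ _ h (cv_one_minus (INR (2 * k + 2))))) top_count_limit).
    rewrite pow1, Rmult_1_r in H. exact H.
  - apply cv_scal, top_count_limit.
Qed.

Lemma cross_remainder_limit :
  Un_cv (fun N => (cross_sum E xi N k - diag_moment E xi 2 * top_count N k h) / INR N ^ h) 0.
Proof.
  apply (remainder_vanishes _ (fun N => Rsum (fun w => indicator (Nat.leb (wt w) h)) (Vset N k))
           (mconst E xi k ^ S k) (INR (S h ^ k))).
  - apply pow_le. generalize (mconst_ge1 E xi k). lra.
  - intros N _. destruct (cross_sum_decomp Omega E xi k h HM Hk N) as [R [-> HR]].
    unfold top_count. replace (_ + R - _) with R by ring. exact HR.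
  - intros N HN. apply low_weight_count; auto.
Qed.

Lemma covariance_remainder_limit :
  Un_cv (fun N => (covariance_sum E xi N k - diag_moment E xi 2 * top_pair_count N k h) / INR N ^ (2 * h)) 0.
Proof.
  apply (remainder_vanishes _
           (fun N => Rsum (fun w => Rsum (fun w' => indicator (Nat.leb (wt (w ++ w')) (2 * h))) (Vset N k)) (Vset N k))
           (2 * mconst E xi k ^ (2 * k)) (INR (S (2 * h) ^ (k + S k)))).
  - assert (0 <= mconst E xi k ^ (2 * k)) by (apply pow_le; generalize (mconst_ge1 E xi k); lra). lra.
  - intros N _. destruct (covariance_sum_decomp Omega E xi k h HM Hk N) as [R [-> HR]].
    unfold top_pair_count. replace (_ + R - _) with R by ring. exact HR.
  - intros N HN. apply low_weight_pair_count; auto.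
Qed.

Lemma E_xi11_Z_limit :
  Un_cv (fun N => E (fun om => xi 1%nat 1%nat om * ZNk E xi N k om)) (INR (length l) * diag_moment E xi 2).
Proof.
  apply (cv_ext_loc (fun N => diag_moment E xi 2 * (top_count N k h / INR N ^ h)
           + (cross_sum E xi N k - diag_moment E xi 2 * top_count N k h) / INR N ^ h)).
  - exists 1%nat. intros N HN. rewrite E_xi11_Z, (scaling_eq N k h HN Hk) by auto.
    assert (0 < INR N ^ h) by (apply pow_lt, lt_0_INR; lia). field. lra.
  - replace (INR (length l) * diag_moment E xi 2) with (diag_moment E xi 2 * INR (length l) + 0) by ring.
    apply CV_plus; [apply cv_scal, top_count_limit | apply cross_remainder_limit].
Qed.

Lemma E_Z_sub_sq_limit :
  Un_cv (fun N => E (fun om => (ZNk E xi N k om - INR (length l) * xi 1%nat 1%nat om) ^ 2)) 0.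
Proof.
  set (c := INR (length l)). set (m2 := diag_moment E xi 2).
  apply (cv_ext_loc (fun N => (m2 * (top_pair_count N k h / INR N ^ (2 * h))
           + (covariance_sum E xi N k - m2 * top_pair_count N k h) / INR N ^ (2 * h))
           - 2 * c * E (fun om => xi 1%nat 1%nat om * ZNk E xi N k om) + c ^ 2 * m2)).
  - exists 1%nat. intros N HN. rewrite E_Z_sub_sq, E_xi11_Z, (scaling_eq N k h HN Hk) by auto.
    assert (0 < INR N ^ h) by (apply pow_lt, lt_0_INR; lia).
    replace (INR N ^ (2 * h)) with (INR N ^ h * INR N ^ h) by (rewrite <- pow_add; f_equal; lia).
    unfold m2. field. lra.
  - replace 0 with ((m2 * (c * c) + 0) - 2 * c * (c * m2) + c ^ 2 * m2) by ring.
    apply CV_plus; [|apply cv_const]. apply CV_minus; [|apply cv_scal, E_xi11_Z_limit].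
    apply CV_plus; [apply cv_scal, top_pair_count_limit | apply covariance_remainder_limit].
Qed.

End Limits.

Theorem mainTheorem17 (Omega : Type) (E : (Omega -> R) -> R)
  (xi : nat -> nat -> Omega -> R) (k a : nat) :
  model_hyps E xi ->
  Nat.Odd k ->
  num_classes (ak_word k) a ->
  Un_cv (fun N => E (fun om => xi 1%nat 1%nat om * ZNk E xi N k om))
        (INR a * E (fun om => xi 1%nat 1%nat om ^ 2)) /\
  Un_cv (fun N => E (fun om => (ZNk E xi N k om - INR a * xi 1%nat 1%nat om) ^ 2)) 0.
Proof.
  intros HM [h Hk] [l [<- Hl]].
  split; [apply (E_xi11_Z_limit Omega E xi k h l) | apply (E_Z_sub_sq_limit Omega E xi k h l)]; auto.
Qed.
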